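(* Assume $H=0$ and that the Riccati equation $\dot K+K(A+G)+(A+G)^TK-\gamma K^2-\widehat Q=0$, $K(T)=-H$, has a unique solution on $[0,T]$. Let $\Phi(t,s)$ be the fundamental solution matrix of $\dot\varphi=(A+G-\gamma K(t))\varphi$ with $\Phi(s,s)=I$, and define $c_1=\max_{t\in[0,T]}|K(t)|$, $c_2=\max_{0\le t,s\le T}|\Phi(t,s)|$, $c_3=\max_{t\in[0,T]}\int_t^T|e^{A(s-t)}|\,s\,ds$, $c_4=\max_{t\in[0,T]}\int_t^T|e^{A(s-t)}|(Ts-\frac{s^2}{2})ds$. If $c_2\,|BR^{-1}B^T|\cdot|Q(I-\Gamma)|\,(c_3+\gamma c_1c_2c_4)<1$, then the system (MF) has a unique solution on $[0,T]$.
   Context: Fix integers $n,n_1\ge1$, $T>0$, constant matrices $A,G,\Gamma\in\mathbb R^{n\times n}$, $B\in\mathbb R^{n\times n_1}$, $\eta,m_0\in\mathbb R^n$, $\gamma>0$, symmetric $Q\ge0$, $H\ge0$ ($n\times n$), $R>0$ ($n_1\times n_1$). $|\cdot|$ is the Euclidean norm for vectors and the Frobenius norm for matrices; $\widehat Q=(I-\Gamma)^TQ(I-\Gamma)$. (MF) is the system $\dot{\mathbf m}=(A+G)\mathbf m+BR^{-1}B^T\mathbf y+\gamma\mathbf p$, $\dot{\mathbf p}=-(A+G)^T\mathbf p-(I-\Gamma)^TQ[\mathbf m-(\Gamma\mathbf m+\eta)]$, $\dot{\mathbf y}=-A^T\mathbf y+Q[\mathbf m-(\Gamma\mathbf m+\eta)]$,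 $\mathbf m(0)=m_0$, $\mathbf p(T)=H\mathbf m(T)$, $\mathbf y(T)=-H\mathbf m(T)$. *)

(* Vectors of R^n are functions nat -> R
   and n x m matrices are functions nat -> nat -> R; only the entries with
   indices < n (resp. < m) are meaningful, and all equalities are stated
   entrywise on that range. *)
From Stdlib Require Import Arith Reals Lra ClassicalEpsilon.
Open Scope R_scope.

Definition vec := nat -> R.
Definition mat := nat -> nat -> R.

Fixpoint rsum (n : nat) (f : nat -> R) : R :=
  match n with O => 0 | S k => rsum k f + f k end.

Definition madd (A B : mat) : mat := fun i j => A i j + B i j.
Definition msub (A B : mat) : mat := fun i j => A i j - B i j.
Definition mopp (A : mat) : mat := fun i j => - A i j.
Definition mscal (c : R) (A : mat) : mat := fun i j => c * A i j.
Definition mtr (A : mat) : mat := fun i j => A j i.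
Definition idm : mat := fun i j => if Nat.eqb i j then 1 else 0.
Definition mmul (p : nat) (A B : mat) : mat :=
  fun i j => rsum p (fun k => A i k * B k j).
Definition mvec (p : nat) (A : mat) (x : vec) : vec :=
  fun i => rsum p (fun k => A i k * x k).
Definition vadd (x y : vec) : vec := fun i => x i + y i.
Definition vsub (x y : vec) : vec := fun i => x i - y i.
Definition vopp (x : vec) : vec := fun i => - x i.
Definition vscal (c : R) (x : vec) : vec := fun i => c * x i.

Definition meq (n m : nat) (A B : mat) : Prop :=
  forall i j, (i < n)%nat -> (j < m)%nat -> A i j = B i j.
Definition veq (n : nat) (x y : vec) : Prop :=
  forall i, (i < n)%nat -> x i = y i.

Definition fnorm (n m : nat) (A : mat) : R :=
  sqrt (rsum n (fun i => rsum m (fun j => A i j ^ 2))).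

Definition symmetric (n : nat) (A : mat) : Prop := meq n n A (mtr A).
Definition psd (n : nat) (A : mat) : Prop :=
  symmetric n A /\ forall x : vec, 0 <= rsum n (fun i => x i * mvec n A x i).
Definition pd (n : nat) (A : mat) : Prop :=
  symmetric n A /\ forall x : vec, (exists i, (i < n)%nat /\ x i <> 0) ->
    0 < rsum n (fun i => x i * mvec n A x i).

Definition minv (n : nat) (M : mat) : mat :=
  epsilon (inhabits (fun _ _ => 0))
    (fun N => meq n n (mmul n M N) idm /\ meq n n (mmul n N M) idm).

Definition mpow (n : nat) (A : mat) (k : nat) : mat :=
  Nat.iter k (fun M => mmul n A M) idm.
Definition mexp (n : nat) (A : mat) (tau : R) : mat :=
  fun i j => epsilon (inhabits 0) (fun l =>
    Un_cv (fun N => sum_f_R0 (fun k => mpow n A k i j * tau ^ k / INR (Factorial.fact k)) N) l).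

Definition integral (f : R -> R) (a b : R) : R :=
  epsilon (inhabits 0) (fun v => exists pr : Riemann_integrable f a b, RiemannInt pr = v).

Definition has_deriv_on (a b : R) (f f' : R -> R) : Prop :=
  forall t, a <= t <= b -> forall eps, 0 < eps -> exists delta, 0 < delta /\
    forall h, h <> 0 -> Rabs h < delta -> a <= t + h <= b ->
      Rabs ((f (t + h) - f t) / h - f' t) < eps.

Definition is_max_on {X : Type} (P : X -> Prop) (f : X -> R) (c : R) : Prop :=
  (exists x, P x /\ f x = c) /\ (forall x, P x -> f x <= c).

(* K solves  K' + K(A+G) + (A+G)^T K - gamma K^2 - Qhat = 0 on [0,T], K(T) = -H *)
Definition riccati_sol (n : nat) (T gamma : R) (A G Gam Q H : mat) (K : R -> mat) : Prop :=
  let AG := madd A G in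
  let Qhat := mmul n (mmul n (mtr (msub idm Gam)) Q) (msub idm Gam) in
  (forall i j, (i < n)%nat -> (j < n)%nat ->
     has_deriv_on 0 T (fun t => K t i j)
       (fun t => (madd (mopp (madd (mmul n (K t) AG) (mmul n (mtr AG) (K t))))
                       (madd (mscal gamma (mmul n (K t) (K t))) Qhat)) i j)) /\
  meq n n (K T) (mopp H).

Definition fundamental_sol (n : nat) (T gamma : R) (A G : mat) (K : R -> mat)
  (Phi : R -> R -> mat) : Prop :=
  forall s, 0 <= s <= T ->
    meq n n (Phi s s) idm /\
    forall i j, (i < n)%nat -> (j < n)%nat ->
      has_deriv_on 0 T (fun t => Phi t s i j)
        (fun t => mmul n (msub (madd A G) (mscal gamma (K t))) (Phi t s) i j).

Definition MF_sol (n n1 : nat) (T gamma : R) (A G Gam B Q H R0 : mat) (eta m0 : vec)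
  (m p y : R -> vec) : Prop :=
  let AG := madd A G in
  let BRB := mmul n1 (mmul n1 B (minv n1 R0)) (mtr B) in
  let dev := fun t => vsub (m t) (vadd (mvec n Gam (m t)) eta) in
  (forall i, (i < n)%nat ->
     has_deriv_on 0 T (fun t => m t i)
       (fun t => (vadd (vadd (mvec n AG (m t)) (mvec n BRB (y t))) (vscal gamma (p t))) i)) /\
  (forall i, (i < n)%nat ->
     has_deriv_on 0 T (fun t => p t i)
       (fun t => (vsub (vopp (mvec n (mtr AG) (p t)))
                       (mvec n (mmul n (mtr (msub idm Gam)) Q) (dev t))) i)) /\
  (forall i, (i < n)%nat ->
     has_deriv_on 0 T (fun t => y t i)
       (fun t => (vadd (vopp (mvec n (mtr A) (y t))) (mvec n Q (dev t))) i)) /\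
  veq n (m 0) m0 /\
  veq n (p T) (mvec n H (m T)) /\
  veq n (y T) (vopp (mvec n H (m T))).

From Stdlib Require Import Reals Lra Lia Psatz Classical ClassicalEpsilon.
From Coquelicot Require Import Coquelicot.
Open Scope R_scope.

(* Everything reduces to the homogeneous problem (eta = 0, m(0) = 0, p(T) = y(T) = 0), whose only
   solution is zero.  Write S = B R^-1 B^T and Y = max |y|.  Since K^T solves the same Riccati
   problem, K is symmetric, and the Riccati equation then turns phi = p + K m into a solution of
   phi' = -(A + G - gamma K)^T phi + K S y with phi(T) = 0; pairing phi with Phi gives
   |phi(t)| <= c1 c2 |S| Y (T - t).  Variation of constants for
   m' = (A + G - gamma K) m + S y + gamma phi gives |m(t)| <= c2 |S| Y (t + gamma c1 c2 (T t - t^2/2)), and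
   y(t) = int_t^T e^(A^T (s - t)) Q (I - Gamma) m(s) ds then yields Y <= kappa Y, where kappa < 1
   is the constant of the smallness hypothesis.  Hence Y = 0, and then m = phi = p = 0.

   Uniqueness follows by linearity.  For existence, a constant extra coordinate turns (MF) into a
   linear ODE z' = M z solved by e^(t M) z(0); the unknown initial values (p(0), y(0)) enter the
   terminal values (p(T), y(T)) through a square linear map, injective by the homogeneous result,
   hence surjective. *)

Lemma rsum_ext n f g : (forall i, (i < n)%nat -> f i = g i) -> rsum n f = rsum n g.
Proof.
  induction n as [|n IH]; intros E; simpl; [reflexivity|].
  rewrite IH by (intros; apply E; lia). now rewrite E by lia.
Qed.

Lemma rsum_add n f g : rsum n (fun i => f i + g i) = rsum n f + rsum n g.
Proof. induction n; simpl; [lra | rewrite IHn; lra]. Qed.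

Lemma rsum_sub n f g : rsum n (fun i => f i - g i) = rsum n f - rsum n g.
Proof. induction n; simpl; [lra | rewrite IHn; lra]. Qed.

Lemma rsum_opp n f : rsum n (fun i => - f i) = - rsum n f.
Proof. induction n; simpl; [lra | rewrite IHn; lra]. Qed.

Lemma rsum_scal_l n c f : rsum n (fun i => c * f i) = c * rsum n f.
Proof. induction n; simpl; [lra | rewrite IHn; lra]. Qed.

Lemma rsum_scal_r n c f : rsum n (fun i => f i * c) = rsum n f * c.
Proof. induction n; simpl; [lra | rewrite IHn; lra]. Qed.

Lemma rsum_eq0 n f : (forall i, (i < n)%nat -> f i = 0) -> rsum n f = 0.
Proof.
  induction n as [|n IH]; intros E; simpl; [reflexivity|].
  rewrite IH by (intros; apply E; lia). rewrite E by lia. ring.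
Qed.

Lemma rsum_le n f g : (forall i, (i < n)%nat -> f i <= g i) -> rsum n f <= rsum n g.
Proof.
  induction n as [|n IH]; intros E; simpl; [lra|].
  apply Rplus_le_compat; [apply IH; intros; apply E|apply E]; lia.
Qed.

Lemma rsum_nonneg n f : (forall i, (i < n)%nat -> 0 <= f i) -> 0 <= rsum n f.
Proof.
  intros Hf. rewrite <- (rsum_eq0 n (fun _ => 0)) by reflexivity. now apply rsum_le.
Qed.

Lemma Rabs_rsum_le n f : Rabs (rsum n f) <= rsum n (fun i => Rabs (f i)).
Proof.
  induction n; simpl; [rewrite Rabs_R0; lra|].
  eapply Rle_trans; [apply Rabs_triang | lra].
Qed.

Lemma rsum_ge_term n f i :
  (forall k, (k < n)%nat -> 0 <= f k) -> (i < n)%nat -> f i <= rsum n f.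
Proof.
  induction n as [|n IH]; intros Hf Hi; [lia|]. simpl.
  assert (0 <= rsum n f) by (apply rsum_nonneg; intros; apply Hf; lia).
  destruct (Nat.eq_dec i n) as [->|Hne]; [lra|].
  assert (f i <= rsum n f) by (apply IH; [intros; apply Hf|]; lia).
  assert (0 <= f n) by (apply Hf; lia). lra.
Qed.

Lemma rsum_comm n m f :
  rsum n (fun i => rsum m (fun j => f i j)) = rsum m (fun j => rsum n (fun i => f i j)).
Proof.
  induction n; simpl.
  - symmetry. now apply rsum_eq0.
  - now rewrite IHn, <- rsum_add.
Qed.

Lemma rsum_split a b f : rsum (a + b) f = rsum a f + rsum b (fun k => f (a + k)%nat).
Proof.
  induction b; simpl; [rewrite Nat.add_0_r; lra|].
  rewrite Nat.add_succ_r. simpl. rewrite IHb. lra.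
Qed.

Lemma rsum_idm_l n i x : (i < n)%nat -> rsum n (fun k => idm i k * x k) = x i.
Proof.
  induction n as [|n IH]; intros Hi; [lia|]. simpl. unfold idm at 2.
  destruct (Nat.eqb_spec i n) as [->|Hne].
  - rewrite rsum_eq0; [ring|]. intros k Hk. unfold idm.
    destruct (Nat.eqb_spec n k); [lia|ring].
  - rewrite IH by lia. ring.
Qed.

Lemma rsum_idm_r n i x : (i < n)%nat -> rsum n (fun k => x k * idm k i) = x i.
Proof.
  intros Hi. rewrite <- (rsum_idm_l n i x Hi). apply rsum_ext. intros k _.
  unfold idm. destruct (Nat.eqb_spec i k), (Nat.eqb_spec k i); subst; try lia; ring.
Qed.

Definition vzero : vec := fun _ => 0.
Definition vdot (n : nat) (u v : vec) : R := rsum n (fun i => u i * v i).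
Definition vnorm (n : nat) (v : vec) : R := sqrt (vdot n v v).

Lemma vdot_sym n u v : vdot n u v = vdot n v u.
Proof. apply rsum_ext; intros; ring. Qed.

Lemma vdot_ext n u u' v v' : veq n u u' -> veq n v v' -> vdot n u v = vdot n u' v'.
Proof. intros Eu Ev. apply rsum_ext; intros. now rewrite Eu, Ev. Qed.

Lemma vdot_self_nonneg n u : 0 <= vdot n u u.
Proof. apply rsum_nonneg; intros; nra. Qed.

Lemma vdot_addr n u v w : vdot n u (vadd v w) = vdot n u v + vdot n u w.
Proof. unfold vdot, vadd. rewrite <- rsum_add. apply rsum_ext; intros; ring. Qed.

Lemma vdot_subr n u v w : vdot n u (vsub v w) = vdot n u v - vdot n u w.
Proof. unfold vdot, vsub. rewrite <- rsum_sub. apply rsum_ext; intros; ring. Qed.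

Lemma vnorm_nonneg n u : 0 <= vnorm n u.
Proof. apply sqrt_pos. Qed.

Lemma vnorm_sq n u : vnorm n u * vnorm n u = vdot n u u.
Proof. apply sqrt_sqrt, vdot_self_nonneg. Qed.

Lemma vnorm_ext n u v : veq n u v -> vnorm n u = vnorm n v.
Proof. intros E. unfold vnorm. f_equal. now apply vdot_ext. Qed.

Lemma sqrt_le_of_le_sq x y : 0 <= y -> x <= y * y -> sqrt x <= y.
Proof.
  intros Hy Hx. rewrite <- (sqrt_square y Hy). now apply sqrt_le_1_alt.
Qed.

Lemma cauchy_schwarz_sq n u v : (vdot n u v) ^ 2 <= vdot n u u * vdot n v v.
Proof.
  unfold vdot. induction n; simpl; [lra|].
  set (a := rsum n (fun i => u i * v i)) in *.
  set (b := rsum n (fun i => u i * u i)) in *.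
  set (c := rsum n (fun i => v i * v i)) in *.
  assert (0 <= b) by (apply rsum_nonneg; intros; nra).
  assert (0 <= c) by (apply rsum_nonneg; intros; nra).
  set (x := u n) in *. set (y := v n) in *.
  (* the cross term 2 a x y is bounded by AM-GM applied to b y^2 and c x^2 *)
  assert (Hamgm : (b*y*y + c*x*x)^2 >= 4*(b*c)*(x*x*y*y)).
  { assert (0 <= (b*y*y - c*x*x)^2) by apply pow2_ge_0. nra. }
  assert (Hcs : 4*(b*c)*(x*x*y*y) >= 4 * a^2 *(x*x*y*y)).
  { assert (0 <= x*x*y*y) by nra. nra. }
  assert (Hpos : 0 <= b*y*y + c*x*x) by nra.
  assert (Hcross : 2*a*x*y <= b*y*y + c*x*x).
  { destruct (Rle_dec (2*a*x*y) 0); [lra|].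
    apply Rnot_lt_le. intros Hc. assert ((b*y*y + c*x*x)^2 < (2*a*x*y)^2) by (simpl; nra). nra. }
  nra.
Qed.

Lemma Rabs_vdot_le n u v : Rabs (vdot n u v) <= vnorm n u * vnorm n v.
Proof.
  unfold vnorm. rewrite <- sqrt_mult by apply vdot_self_nonneg.
  rewrite <- sqrt_Rsqr_abs. apply sqrt_le_1_alt. unfold Rsqr.
  pose proof (cauchy_schwarz_sq n u v). simpl in *. lra.
Qed.

Lemma vdot_le n u v : vdot n u v <= vnorm n u * vnorm n v.
Proof. eapply Rle_trans; [apply Rle_abs | apply Rabs_vdot_le]. Qed.

Lemma vnorm_eq0 n u : vnorm n u = 0 -> veq n u vzero.
Proof.
  intros H i Hi. pose proof (vnorm_sq n u) as Hsq. rewrite H in Hsq.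
  assert (u i * u i <= vdot n u u)
    by (apply (rsum_ge_term n (fun i => u i * u i)); auto; intros; nra).
  unfold vzero. nra.
Qed.

Lemma vnorm_le_sum_abs n u : vnorm n u <= rsum n (fun i => Rabs (u i)).
Proof.
  apply sqrt_le_of_le_sq; [apply rsum_nonneg; intros; apply Rabs_pos|].
  unfold vdot. induction n; simpl; [lra|].
  assert (0 <= rsum n (fun i => Rabs (u i))) by (apply rsum_nonneg; intros; apply Rabs_pos).
  pose proof (Rabs_pos (u n)).
  assert (u n * u n = Rabs (u n) * Rabs (u n)) by (rewrite <- Rabs_mult, Rabs_right; nra).
  nra.
Qed.

Lemma vnorm_add_le n u v : vnorm n (vadd u v) <= vnorm n u + vnorm n v.
Proof.
  pose proof (vnorm_nonneg n u); pose proof (vnorm_nonneg n v).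
  apply sqrt_le_of_le_sq; [lra|].
  assert (E : vdot n (vadd u v) (vadd u v) = vdot n u u + 2 * vdot n u v + vdot n v v).
  { unfold vdot, vadd. rewrite <- rsum_scal_l, <- !rsum_add. apply rsum_ext; intros; ring. }
  rewrite E, <- (vnorm_sq n u), <- (vnorm_sq n v). pose proof (vdot_le n u v). nra.
Qed.

Lemma vnorm_opp n u : vnorm n (vopp u) = vnorm n u.
Proof. unfold vnorm, vdot, vopp. f_equal. apply rsum_ext; intros; ring. Qed.

Lemma vnorm_scal n c u : vnorm n (vscal c u) = Rabs c * vnorm n u.
Proof.
  unfold vnorm, vdot, vscal.
  rewrite <- (sqrt_Rsqr_abs c), <- sqrt_mult by (apply Rle_0_sqr || (apply rsum_nonneg; intros; nra)).
  f_equal. rewrite <- rsum_scal_l. apply rsum_ext; intros. unfold Rsqr; ring.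
Qed.

Lemma Rabs_vnorm_sub_le n u v : Rabs (vnorm n u - vnorm n v) <= vnorm n (vsub u v).
Proof.
  assert (vnorm n u <= vnorm n (vsub u v) + vnorm n v).
  { rewrite <- (vnorm_ext n (vadd (vsub u v) v) u) by (intros i _; unfold vadd, vsub; ring).
    apply vnorm_add_le. }
  assert (vnorm n v <= vnorm n (vsub u v) + vnorm n u).
  { rewrite <- (vnorm_ext n (vadd (vopp (vsub u v)) u) v) by (intros i _; unfold vadd, vsub, vopp; ring).
    rewrite <- (vnorm_opp n (vsub u v)). apply vnorm_add_le. }
  apply Rabs_le; lra.
Qed.

Lemma fnorm_nonneg n m M : 0 <= fnorm n m M.
Proof. apply sqrt_pos. Qed.

Lemma vnorm_mvec_le n M x : vnorm n (mvec n M x) <= fnorm n n M * vnorm n x.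
Proof.
  unfold vnorm, fnorm.
  rewrite <- sqrt_mult by (apply rsum_nonneg; intros; try apply rsum_nonneg; intros; nra).
  apply sqrt_le_1_alt. unfold vdot. rewrite <- rsum_scal_r. apply rsum_le. intros i Hi.
  pose proof (cauchy_schwarz_sq n (M i) x) as Hcs. unfold vdot in Hcs. simpl in Hcs.
  replace (rsum n (fun j => M i j ^ 2)) with (rsum n (fun k => M i k * M i k))
    by (apply rsum_ext; intros; ring).
  unfold mvec. nra.
Qed.

Lemma fnorm_mtr n M : fnorm n n (mtr M) = fnorm n n M.
Proof. unfold fnorm, mtr. f_equal. apply rsum_comm. Qed.

Lemma Rabs_entry_le_fnorm n M i j :
  (i < n)%nat -> (j < n)%nat -> Rabs (M i j) <= fnorm n n M.
Proof.
  intros Hi Hj. unfold fnorm. rewrite <- sqrt_Rsqr_abs. apply sqrt_le_1_alt. unfold Rsqr.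
  replace (M i j * M i j) with (M i j ^ 2) by ring.
  eapply Rle_trans;
    [|apply (rsum_ge_term n (fun i => rsum n (fun j => M i j ^ 2)) i); auto;
      intros; apply rsum_nonneg; intros; nra].
  apply (rsum_ge_term n (fun j => M i j ^ 2)); auto. intros; nra.
Qed.

Lemma mvec_ext n A B x y i :
  (forall k, (k < n)%nat -> A i k = B i k) -> veq n x y -> mvec n A x i = mvec n B y i.
Proof. intros EA Ex. apply rsum_ext; intros. now rewrite EA, Ex. Qed.

Lemma mvec_madd n A B x i : mvec n (madd A B) x i = mvec n A x i + mvec n B x i.
Proof. unfold mvec, madd. rewrite <- rsum_add. apply rsum_ext; intros; ring. Qed.

Lemma mvec_msub n A B x i : mvec n (msub A B) x i = mvec n A x i - mvec n B x i.
Proof. unfold mvec, msub. rewrite <- rsum_sub. apply rsum_ext; intros; ring. Qed.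

Lemma mvec_mopp n A x i : mvec n (mopp A) x i = - mvec n A x i.
Proof. unfold mvec, mopp. rewrite <- rsum_opp. apply rsum_ext; intros; ring. Qed.

Lemma mvec_mscal n c A x i : mvec n (mscal c A) x i = c * mvec n A x i.
Proof. unfold mvec, mscal. rewrite <- rsum_scal_l. apply rsum_ext; intros; ring. Qed.

Lemma mvec_vadd n A x y i : mvec n A (vadd x y) i = mvec n A x i + mvec n A y i.
Proof. unfold mvec, vadd. rewrite <- rsum_add. apply rsum_ext; intros; ring. Qed.

Lemma mvec_vsub n A x y i : mvec n A (vsub x y) i = mvec n A x i - mvec n A y i.
Proof. unfold mvec, vsub. rewrite <- rsum_sub. apply rsum_ext; intros; ring. Qed.

Lemma mvec_vopp n A x i : mvec n A (vopp x) i = - mvec n A x i.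
Proof. unfold mvec, vopp. rewrite <- rsum_opp. apply rsum_ext; intros; ring. Qed.

Lemma mvec_vscal n A c x i : mvec n A (vscal c x) i = c * mvec n A x i.
Proof. unfold mvec, vscal. rewrite <- rsum_scal_l. apply rsum_ext; intros; ring. Qed.

Lemma mvec_vzero n A i : mvec n A vzero i = 0.
Proof. apply rsum_eq0. intros; unfold vzero; ring. Qed.

Lemma mvec_mmul n A B x i : mvec n (mmul n A B) x i = mvec n A (mvec n B x) i.
Proof.
  unfold mvec, mmul.
  transitivity (rsum n (fun k => rsum n (fun l => A i l * B l k * x k))).
  - apply rsum_ext; intros. now rewrite <- rsum_scal_r.
  - rewrite rsum_comm. apply rsum_ext; intros.
    rewrite <- rsum_scal_l. apply rsum_ext; intros; ring.
Qed.

Lemma mvec_idm n x i : (i < n)%nat -> mvec n idm x i = x i.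
Proof. apply rsum_idm_l. Qed.

Lemma mvec_unit n X k i : (k < n)%nat -> mvec n X (fun l => idm l k) i = X i k.
Proof. apply rsum_idm_r. Qed.

Lemma mvec_eq0 n H x i : meq n n H (fun _ _ => 0) -> (i < n)%nat -> mvec n H x i = 0.
Proof. intros H0 Hi. apply rsum_eq0. intros. rewrite H0; auto; ring. Qed.

Lemma vdot_mvec n A u v : vdot n (mvec n A u) v = vdot n u (mvec n (mtr A) v).
Proof.
  unfold vdot, mvec, mtr.
  transitivity (rsum n (fun i => rsum n (fun k => A i k * u k * v i))).
  - apply rsum_ext; intros. now rewrite <- rsum_scal_r.
  - rewrite rsum_comm. apply rsum_ext; intros.
    rewrite <- rsum_scal_l. apply rsum_ext; intros; ring.
Qed.

Lemma mtr_mmul n X Z i j : mtr (mmul n X Z) i j = mmul n (mtr Z) (mtr X) i j.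
Proof. apply rsum_ext; intros; unfold mtr; ring. Qed.

Lemma vadd_app u v i : vadd u v i = u i + v i. Proof. reflexivity. Qed.
Lemma vsub_app u v i : vsub u v i = u i - v i. Proof. reflexivity. Qed.
Lemma vopp_app u i : vopp u i = - u i. Proof. reflexivity. Qed.
Lemma vscal_app c u i : vscal c u i = c * u i. Proof. reflexivity. Qed.
Lemma vzero_app i : vzero i = 0. Proof. reflexivity. Qed.

Ltac vsimp := repeat progress (
  rewrite ?vadd_app, ?vsub_app, ?vopp_app, ?vscal_app, ?vzero_app,
          ?mvec_vsub, ?mvec_vadd, ?mvec_vopp, ?mvec_vscal, ?mvec_vzero,
          ?mvec_madd, ?mvec_msub, ?mvec_mopp, ?mvec_mscal, ?mvec_mmul).

Definition lim_in (a b t : R) (F : R -> R) (L : R) : Prop :=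
  forall eps, 0 < eps -> exists delta, 0 < delta /\
    forall h, h <> 0 -> Rabs h < delta -> a <= t + h <= b -> Rabs (F h - L) < eps.

Definition cont_in (a b : R) (f : R -> R) (t : R) : Prop :=
  lim_in a b t (fun h => f (t + h)) (f t).

Section Limits.
Variables a b t : R.

Lemma lim_in_ext F G L :
  (forall h, h <> 0 -> a <= t + h <= b -> F h = G h) -> lim_in a b t F L -> lim_in a b t G L.
Proof.
  intros E H e He. destruct (H e He) as [d [Hd Hh]].
  exists d; split; auto. intros. rewrite <- E; auto.
Qed.

Lemma lim_in_const L : lim_in a b t (fun _ => L) L.
Proof. intros e He. exists 1. split; [lra|]. intros. rewrite Rminus_diag, Rabs_R0; lra. Qed.

Lemma lim_in_id : lim_in a b t (fun h => h) 0.
Proof. intros e He. exists e. split; auto. intros. now rewrite Rminus_0_r. Qed.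

Lemma lim_in_add F G L M :
  lim_in a b t F L -> lim_in a b t G M -> lim_in a b t (fun h => F h + G h) (L + M).
Proof.
  intros H1 H2 e He.
  destruct (H1 (e/2)) as [d1 [Hd1 P1]]; [lra|]. destruct (H2 (e/2)) as [d2 [Hd2 P2]]; [lra|].
  exists (Rmin d1 d2). split; [now apply Rmin_pos|]. intros h Hh Hd Hab.
  assert (Rabs h < d1) by (eapply Rlt_le_trans; [apply Hd | apply Rmin_l]).
  assert (Rabs h < d2) by (eapply Rlt_le_trans; [apply Hd | apply Rmin_r]).
  specialize (P1 h Hh ltac:(assumption) Hab). specialize (P2 h Hh ltac:(assumption) Hab).
  replace (F h + G h - (L + M)) with ((F h - L) + (G h - M)) by ring.
  eapply Rle_lt_trans; [apply Rabs_triang | lra].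
Qed.

Lemma lim_in_scal c F L : lim_in a b t F L -> lim_in a b t (fun h => c * F h) (c * L).
Proof.
  intros H e He. pose proof (Rabs_pos c).
  destruct (H (e / (Rabs c + 1))) as [d [Hd P]]; [apply Rdiv_lt_0_compat; lra|].
  exists d; split; auto. intros h Hh Hd' Hab. specialize (P h Hh Hd' Hab).
  replace (c * F h - c * L) with (c * (F h - L)) by ring. rewrite Rabs_mult.
  apply Rlt_le_trans with ((Rabs c + 1) * (e / (Rabs c + 1))); [|right; field; lra].
  assert (0 < e / (Rabs c + 1)) by (apply Rdiv_lt_0_compat; lra).
  pose proof (Rabs_pos (F h - L)). nra.
Qed.

Lemma lim_in_opp F L : lim_in a b t F L -> lim_in a b t (fun h => - F h) (- L).
Proof.
  intros H. replace (- L) with (-1 * L) by ring.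
  eapply lim_in_ext; [|apply (lim_in_scal (-1) _ _ H)]. intros; simpl; ring.
Qed.

Lemma lim_in_sub F G L M :
  lim_in a b t F L -> lim_in a b t G M -> lim_in a b t (fun h => F h - G h) (L - M).
Proof. intros H1 H2. apply lim_in_add; auto. now apply lim_in_opp. Qed.

Lemma lim_in_eq0 F L : lim_in a b t F L <-> lim_in a b t (fun h => F h - L) 0.
Proof.
  split; intros H.
  - replace 0 with (L - L) by ring. apply lim_in_sub; auto. apply lim_in_const.
  - replace L with (0 + L) by ring.
    eapply lim_in_ext; [|apply lim_in_add; [apply H | apply lim_in_const]].
    intros; simpl; ring.
Qed.

Lemma lim_in_le0 F G :
  (forall h, h <> 0 -> a <= t + h <= b -> Rabs (F h) <= G h) ->
  lim_in a b t G 0 -> lim_in a b t F 0.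
Proof.
  intros B H e He. destruct (H e He) as [d [Hd P]]. exists d; split; auto.
  intros h Hh Hd' Hab. specialize (P h Hh Hd' Hab). specialize (B h Hh Hab).
  rewrite Rminus_0_r in *. pose proof (Rle_abs (G h)). lra.
Qed.

Lemma lim_in_abs0 F : lim_in a b t F 0 -> lim_in a b t (fun h => Rabs (F h)) 0.
Proof.
  intros H e He. destruct (H e He) as [d [Hd P]]. exists d; split; auto.
  intros. rewrite Rminus_0_r, Rabs_Rabsolu. rewrite <- (Rminus_0_r (F h)). auto.
Qed.

Lemma lim_in_mul0 F G : lim_in a b t F 0 -> lim_in a b t G 0 -> lim_in a b t (fun h => F h * G h) 0.
Proof.
  intros H1 H2 e He.
  destruct (H1 e He) as [d1 [Hd1 P1]]. destruct (H2 1 Rlt_0_1) as [d2 [Hd2 P2]].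
  exists (Rmin d1 d2). split; [now apply Rmin_pos|]. intros h Hh Hd Hab.
  specialize (P1 h Hh ltac:(eapply Rlt_le_trans; [apply Hd | apply Rmin_l]) Hab).
  specialize (P2 h Hh ltac:(eapply Rlt_le_trans; [apply Hd | apply Rmin_r]) Hab).
  rewrite Rminus_0_r in *. rewrite Rabs_mult.
  pose proof (Rabs_pos (F h)). pose proof (Rabs_pos (G h)). nra.
Qed.

Lemma lim_in_mul F G L M :
  lim_in a b t F L -> lim_in a b t G M -> lim_in a b t (fun h => F h * G h) (L * M).
Proof.
  rewrite !(lim_in_eq0 _ (_ * _)), (lim_in_eq0 F), (lim_in_eq0 G). intros H1 H2.
  replace 0 with (0 + (L * 0 + M * 0)) by ring.
  eapply lim_in_ext;
    [|apply lim_in_add; [apply (lim_in_mul0 _ _ H1 H2)|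
                         apply lim_in_add; apply lim_in_scal; [apply H2 | apply H1]]].
  intros; simpl; ring.
Qed.

Lemma lim_in_rsum n F L :
  (forall i, (i < n)%nat -> lim_in a b t (F i) (L i)) ->
  lim_in a b t (fun h => rsum n (fun i => F i h)) (rsum n L).
Proof.
  induction n; intros H; simpl; [apply lim_in_const|].
  apply lim_in_add; [apply IHn; intros; apply H; lia | apply H; lia].
Qed.

Lemma lim_in_rsum0 n F :
  (forall i, (i < n)%nat -> lim_in a b t (F i) 0) -> lim_in a b t (fun h => rsum n (fun i => F i h)) 0.
Proof.
  intros H. pose proof (lim_in_rsum n F (fun _ => 0) H) as L.
  now rewrite rsum_eq0 in L by reflexivity.
Qed.

End Limits.

Lemma deriv_on_lim a b f f' t :
  has_deriv_on a b f f' -> a <= t <= b -> lim_in a b t (fun h => (f (t + h) - f t) / h) (f' t).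
Proof. intros H Ht. exact (H t Ht). Qed.

Lemma deriv_on_cont a b f f' t : has_deriv_on a b f f' -> a <= t <= b -> cont_in a b f t.
Proof.
  intros H Ht. apply lim_in_eq0. replace 0 with (f' t * 0) by ring.
  eapply lim_in_ext; [|apply (lim_in_mul _ _ _ _ _ _ _ (H t Ht) (lim_in_id a b t))].
  intros h Hh _. simpl. field; auto.
Qed.

Lemma deriv_on_is_derive a b f f' t : has_deriv_on a b f f' -> a < t < b -> is_derive f t (f' t).
Proof.
  intros H Ht. apply is_derive_Reals. intros e He.
  destruct (H t ltac:(lra) e He) as [d [Hd P]].
  assert (Hd' : 0 < Rmin d (Rmin (t - a) (b - t))) by (repeat apply Rmin_pos; lra).
  exists (mkposreal _ Hd'). intros h Hh Hlt. simpl in Hlt.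
  apply Rmin_Rgt in Hlt as [Hlt1 Hlt2]. apply Rmin_Rgt in Hlt2 as [Hlt2 Hlt3].
  apply P; auto. apply Rabs_def2 in Hlt1. apply Rabs_def2 in Hlt2. apply Rabs_def2 in Hlt3. lra.
Qed.

Section Derivatives.
Variables a b : R.

Lemma deriv_on_ext f f' g' :
  (forall t, a <= t <= b -> f' t = g' t) -> has_deriv_on a b f f' -> has_deriv_on a b f g'.
Proof. intros E H t Ht. rewrite <- E; auto. Qed.

Lemma deriv_on_const c : has_deriv_on a b (fun _ => c) (fun _ => 0).
Proof. intros t Ht. eapply lim_in_ext; [|apply lim_in_const]. intros; simpl. field; auto. Qed.

Lemma deriv_on_id : has_deriv_on a b (fun t => t) (fun _ => 1).
Proof. intros t Ht. eapply lim_in_ext; [|apply lim_in_const]. intros; simpl. field; auto. Qed.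

Lemma deriv_on_add f f' g g' : has_deriv_on a b f f' -> has_deriv_on a b g g' ->
  has_deriv_on a b (fun t => f t + g t) (fun t => f' t + g' t).
Proof.
  intros H1 H2 t Ht. eapply lim_in_ext; [|apply (lim_in_add _ _ _ _ _ _ _ (H1 t Ht) (H2 t Ht))].
  intros; simpl. field; auto.
Qed.

Lemma deriv_on_scal c f f' :
  has_deriv_on a b f f' -> has_deriv_on a b (fun t => c * f t) (fun t => c * f' t).
Proof.
  intros H t Ht. eapply lim_in_ext; [|apply (lim_in_scal _ _ _ c _ _ (H t Ht))].
  intros; simpl. field; auto.
Qed.

Lemma deriv_on_opp f f' : has_deriv_on a b f f' -> has_deriv_on a b (fun t => - f t) (fun t => - f' t).
Proof.
  intros H t Ht. eapply lim_in_ext; [|apply (lim_in_opp _ _ _ _ _ (H t Ht))].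
  intros; simpl. field; auto.
Qed.

Lemma deriv_on_sub f f' g g' : has_deriv_on a b f f' -> has_deriv_on a b g g' ->
  has_deriv_on a b (fun t => f t - g t) (fun t => f' t - g' t).
Proof. intros H1 H2. apply deriv_on_add; auto. now apply deriv_on_opp. Qed.

Lemma deriv_on_mul f f' g g' : has_deriv_on a b f f' -> has_deriv_on a b g g' ->
  has_deriv_on a b (fun t => f t * g t) (fun t => f' t * g t + f t * g' t).
Proof.
  intros H1 H2 t Ht.
  eapply lim_in_ext;
    [|apply lim_in_add; [apply (lim_in_mul _ _ _ _ _ _ _ (H1 t Ht) (deriv_on_cont _ _ _ _ _ H2 Ht))
                        | apply (lim_in_scal _ _ _ (f t) _ _ (H2 t Ht))]].
  intros; simpl. field; auto.
Qed.

Lemma deriv_on_rsum n F F' : (forall i, (i < n)%nat -> has_deriv_on a b (F i) (F' i)) ->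
  has_deriv_on a b (fun t => rsum n (fun i => F i t)) (fun t => rsum n (fun i => F' i t)).
Proof.
  intros H t Ht.
  eapply lim_in_ext; [|apply (lim_in_rsum _ _ _ n (fun i h => (F i (t + h) - F i t) / h))].
  - intros h Hh _. simpl. unfold Rdiv. rewrite <- rsum_sub, <- rsum_scal_r.
    apply rsum_ext; intros; ring.
  - intros i Hi. apply (deriv_on_lim _ _ _ _ t (H i Hi) Ht).
Qed.

Lemma deriv_on_exp_scal c : has_deriv_on a b (fun t => exp (c * t)) (fun t => c * exp (c * t)).
Proof.
  intros t Ht e He.
  assert (Dl : derivable_pt_lim (fun t => exp (c * t)) t (c * exp (c * t))).
  { apply is_derive_Reals. auto_derive; [exact I | ring]. }
  destruct (Dl e He) as [d P]. exists d. split; [apply cond_pos|]. intros. apply P; auto.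
Qed.

End Derivatives.

(** * Monotonicity and the mean value inequality *)

Lemma deriv_nonpos_interior a b f f' x y :
  has_deriv_on a b f f' -> (forall t, a <= t <= b -> f' t <= 0) ->
  a < x -> x <= y -> y < b -> f y <= f x.
Proof.
  intros Hd Hn Hax Hxy Hyb. destruct (Req_dec x y) as [->|Hne]; [lra|].
  apply Rle_plus_epsilon. intros e He.
  set (k := e / (y - x)). assert (Hk : 0 < k) by (apply Rdiv_lt_0_compat; lra).
  assert (Dg : has_deriv_on a b (fun t => k * t - f t) (fun t => k * 1 - f' t))
    by (apply deriv_on_sub; [apply deriv_on_scal, deriv_on_id | exact Hd]).
  assert (Hg : k * x - f x < k * y - f y).
  { apply (incr_function (fun t => k * t - f t) a b (fun t => k * 1 - f' t)); simpl; try lra.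
    - intros z Haz Hzb. exact (deriv_on_is_derive a b _ _ z Dg ltac:(lra)).
    - intros z Haz Hzb. specialize (Hn z ltac:(lra)). lra. }
  assert (Hky : k * (y - x) = e) by (unfold k; field; lra). lra.
Qed.

Lemma deriv_nonpos_nonincreasing a b f f' x y :
  has_deriv_on a b f f' -> (forall t, a <= t <= b -> f' t <= 0) ->
  a <= x -> x <= y -> y <= b -> f y <= f x.
Proof.
  intros Hd Hn Hax Hxy Hyb. destruct (Req_dec x y) as [->|Hne]; [lra|].
  apply Rnot_lt_le. intros Hlt. set (d := f y - f x).
  destruct (deriv_on_cont a b f f' x Hd ltac:(lra) (d/2) ltac:(unfold d; lra)) as [dx [Hdx Cx]].
  destruct (deriv_on_cont a b f f' y Hd ltac:(lra) (d/2) ltac:(unfold d; lra)) as [dy [Hdy Cy]].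
  (* reach the endpoints from the interior inequality by continuity *)
  set (h := Rmin (Rmin dx dy) (y - x) / 2).
  assert (Hm : 0 < Rmin (Rmin dx dy) (y - x)) by (repeat apply Rmin_pos; lra).
  assert (Hm1 : Rmin (Rmin dx dy) (y - x) <= dx) by (eapply Rle_trans; apply Rmin_l).
  assert (Hm2 : Rmin (Rmin dx dy) (y - x) <= dy)
    by (eapply Rle_trans; [apply Rmin_l | apply Rmin_r]).
  assert (Hm3 : Rmin (Rmin dx dy) (y - x) <= y - x) by apply Rmin_r.
  specialize (Cx h ltac:(unfold h; lra) ltac:(unfold h; rewrite Rabs_right; lra)
                ltac:(unfold h; lra)).
  specialize (Cy (- h) ltac:(unfold h; lra) ltac:(unfold h; rewrite Rabs_Ropp, Rabs_right; lra)
                ltac:(unfold h; lra)).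
  assert (Hint : f (y + - h) <= f (x + h))
    by (apply (deriv_nonpos_interior a b f f'); auto; unfold h; lra).
  apply Rabs_def2 in Cx. apply Rabs_def2 in Cy. unfold d in *. lra.
Qed.

Lemma deriv_nonneg_nondecreasing a b f f' x y :
  has_deriv_on a b f f' -> (forall t, a <= t <= b -> 0 <= f' t) ->
  a <= x -> x <= y -> y <= b -> f x <= f y.
Proof.
  intros Hd Hp Hax Hxy Hyb.
  enough (- f y <= - f x) by lra.
  apply (deriv_nonpos_nonincreasing a b (fun t => - f t) (fun t => - f' t)); auto.
  - now apply deriv_on_opp.
  - intros t Ht. specialize (Hp t Ht). lra.
Qed.

Lemma deriv_zero_const a b f : has_deriv_on a b f (fun _ => 0) -> forall x, a <= x <= b -> f x = f a.
Proof.
  intros H x Hx. apply Rle_antisym.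
  - apply (deriv_nonpos_nonincreasing a b f (fun _ => 0)); auto; intros; lra.
  - apply (deriv_nonneg_nondecreasing a b f (fun _ => 0)); auto; intros; lra.
Qed.

Lemma mean_value_ineq a b f f' B b' x y :
  has_deriv_on a b f f' -> has_deriv_on a b B b' ->
  (forall t, a <= t <= b -> Rabs (f' t) <= b' t) ->
  a <= x -> x <= y -> y <= b -> Rabs (f y - f x) <= B y - B x.
Proof.
  intros Hf HB Hb Hax Hxy Hyb.
  assert (f y - B y <= f x - B x).
  { apply (deriv_nonpos_nonincreasing a b (fun t => f t - B t) (fun t => f' t - b' t)); auto.
    - now apply deriv_on_sub.
    - intros t Ht. specialize (Hb t Ht). pose proof (Rle_abs (f' t)). lra. }
  assert (- f y - B y <= - f x - B x).
  { apply (deriv_nonpos_nonincreasing a b (fun t => - f t - B t) (fun t => - f' t - b' t)); auto.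
    - apply deriv_on_sub; auto. now apply deriv_on_opp.
    - intros t Ht. specialize (Hb t Ht). pose proof (Rle_abs (- f' t)).
      rewrite Rabs_Ropp in *. lra. }
  apply Rabs_le; lra.
Qed.

Lemma cont_in_max a b g : a <= b -> (forall t, a <= t <= b -> cont_in a b g t) ->
  exists x0, a <= x0 <= b /\ forall t, a <= t <= b -> g t <= g x0.
Proof.
  intros Hab Hc.
  (* extend g continuously to R by clamping the argument to [a,b] *)
  set (cl := fun x => Rmax a (Rmin b x)).
  assert (Hcl : forall x, a <= cl x <= b)
    by (intros; unfold cl, Rmax, Rmin; destruct (Rle_dec b x); destruct (Rle_dec a _); lra).
  assert (Hcl_id : forall x, a <= x <= b -> cl x = x)
    by (intros; unfold cl, Rmax, Rmin; destruct (Rle_dec b x); destruct (Rle_dec a _); lra).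
  assert (Hcl_lip : forall x c, a <= c <= b -> Rabs (cl x - c) <= Rabs (x - c))
    by (intros; unfold cl, Rmax, Rmin; destruct (Rle_dec b x); destruct (Rle_dec a _);
        unfold Rabs; repeat destruct Rcase_abs; lra).
  destruct (continuity_ab_maj (fun x => g (cl x)) a b Hab) as [M [HM1 HM2]].
  { intros c Hc0. unfold continuity_pt, continue_in, limit1_in, limit_in. simpl. unfold R_dist.
    intros e He. destruct (Hc c Hc0 e He) as [d [Hd P]]. exists d. split; auto.
    intros x [_ Hx]. rewrite (Hcl_id c Hc0).
    destruct (Req_dec (cl x) c) as [->|Hne]; [rewrite Rminus_diag, Rabs_R0; auto|].
    specialize (P (cl x - c) ltac:(lra)). replace (c + (cl x - c)) with (cl x) in P by ring.
    apply P; [eapply Rle_lt_trans; [apply Hcl_lip|]; auto | apply Hcl]. }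
  exists (cl M). split; [apply Hcl|]. intros t Ht. rewrite <- (Hcl_id t Ht). now apply HM1.
Qed.

Definition has_vderiv_on (n : nat) (a b : R) (f f' : R -> vec) : Prop :=
  forall i, (i < n)%nat -> has_deriv_on a b (fun t => f t i) (fun t => f' t i).

Section VectorDerivatives.
Variables (n : nat) (a b : R).

Lemma vderiv_on_ext f f' g' :
  (forall t, a <= t <= b -> veq n (f' t) (g' t)) -> has_vderiv_on n a b f f' -> has_vderiv_on n a b f g'.
Proof. intros E H i Hi. apply (deriv_on_ext _ _ _ (fun t => f' t i)); [intros; apply E | apply H]; auto. Qed.

Lemma vderiv_on_add f f' g g' : has_vderiv_on n a b f f' -> has_vderiv_on n a b g g' ->
  has_vderiv_on n a b (fun t => vadd (f t) (g t)) (fun t => vadd (f' t) (g' t)).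
Proof. intros H1 H2 i Hi. apply deriv_on_add; auto. Qed.

Lemma vderiv_on_sub f f' g g' : has_vderiv_on n a b f f' -> has_vderiv_on n a b g g' ->
  has_vderiv_on n a b (fun t => vsub (f t) (g t)) (fun t => vsub (f' t) (g' t)).
Proof. intros H1 H2 i Hi. apply deriv_on_sub; auto. Qed.

Lemma vderiv_on_mvec (X X' : R -> mat) x x' :
  (forall i j, (i < n)%nat -> (j < n)%nat -> has_deriv_on a b (fun t => X t i j) (fun t => X' t i j)) ->
  has_vderiv_on n a b x x' ->
  has_vderiv_on n a b (fun t => mvec n (X t) (x t))
    (fun t => vadd (mvec n (X' t) (x t)) (mvec n (X t) (x' t))).
Proof.
  intros HX Hx i Hi. unfold mvec, vadd.
  apply (deriv_on_ext _ _ _ (fun t => rsum n (fun k => X' t i k * x t k + X t i k * x' t k)));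
    [intros; apply rsum_add|].
  apply (deriv_on_rsum a b n (fun k t => X t i k * x t k)). intros k Hk.
  apply deriv_on_mul; [apply HX | apply Hx]; auto.
Qed.

Lemma vderiv_on_mvec_const (X X' : R -> mat) w :
  (forall i j, (i < n)%nat -> (j < n)%nat -> has_deriv_on a b (fun t => X t i j) (fun t => X' t i j)) ->
  has_vderiv_on n a b (fun t => mvec n (X t) w) (fun t => mvec n (X' t) w).
Proof.
  intros HX. eapply vderiv_on_ext; [|apply (vderiv_on_mvec X X' (fun _ => w) (fun _ => vzero) HX)].
  - intros t _ i _. unfold vadd. rewrite mvec_vzero. ring.
  - intros i _. apply deriv_on_const.
Qed.

Lemma deriv_on_vdot u u' v v' : has_vderiv_on n a b u u' -> has_vderiv_on n a b v v' ->
  has_deriv_on a b (fun t => vdot n (u t) (v t)) (fun t => vdot n (u' t) (v t) + vdot n (u t) (v' t)).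
Proof.
  intros H1 H2. unfold vdot.
  eapply deriv_on_ext;
    [|apply (deriv_on_rsum a b n (fun i t => u t i * v t i) (fun i t => u' t i * v t i + u t i * v' t i))].
  - intros; simpl. apply rsum_add.
  - intros i Hi. apply deriv_on_mul; auto.
Qed.

Lemma vmean_value_ineq q q' B b' x y : has_vderiv_on n a b q q' -> has_deriv_on a b B b' ->
  (forall t, a <= t <= b -> vnorm n (q' t) <= b' t) ->
  a <= x -> x <= y -> y <= b -> vnorm n (vsub (q y) (q x)) <= B y - B x.
Proof.
  intros Hq HB Hb Hax Hxy Hyb. set (w := vsub (q y) (q x)).
  (* project onto the direction of the increment w *)
  assert (Hm : vdot n w (q y) - vnorm n w * B y <= vdot n w (q x) - vnorm n w * B x).
  { apply (deriv_nonpos_nonincreasing a b (fun t => vdot n w (q t) - vnorm n w * B t)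
             (fun t => vdot n w (q' t) - vnorm n w * b' t)); auto.
    - apply deriv_on_sub; [|now apply deriv_on_scal].
      eapply deriv_on_ext; [|apply (deriv_on_vdot (fun _ => w) (fun _ => vzero) q q')]; auto.
      + intros t _. unfold vdot, vzero. rewrite rsum_eq0 by (intros; ring). ring.
      + intros i _. apply deriv_on_const.
    - intros t Ht. pose proof (vdot_le n w (q' t)). specialize (Hb t Ht).
      pose proof (vnorm_nonneg n w). pose proof (vnorm_nonneg n (q' t)). nra. }
  assert (E : vdot n w (q y) - vdot n w (q x) = vnorm n w * vnorm n w)
    by (rewrite vnorm_sq; unfold w; now rewrite <- vdot_subr).
  assert (Hmon : B x <= B y).
  { apply (deriv_nonneg_nondecreasing a b B b'); auto. intros t Ht.
    specialize (Hb t Ht). pose proof (vnorm_nonneg n (q' t)). lra. }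
  pose proof (vnorm_nonneg n w).
  destruct (Req_dec (vnorm n w) 0) as [H0|H0]; [rewrite H0; lra|].
  apply Rmult_le_reg_l with (vnorm n w); lra.
Qed.

Lemma cont_in_vnorm (z z' : R -> vec) t :
  has_vderiv_on n a b z z' -> a <= t <= b -> cont_in a b (fun s => vnorm n (z s)) t.
Proof.
  intros Hz Ht. apply lim_in_eq0.
  apply (lim_in_le0 _ _ _ _ (fun h => rsum n (fun i => Rabs (z (t + h) i - z t i)))).
  - intros h Hh Hab. eapply Rle_trans; [apply Rabs_vnorm_sub_le | apply vnorm_le_sum_abs].
  - apply lim_in_rsum0. intros i Hi.
    apply lim_in_abs0, (lim_in_eq0 a b t (fun h => z (t + h) i)).
    exact (deriv_on_cont a b (fun s => z s i) _ t (Hz i Hi) Ht).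
Qed.

Lemma exp_weighted_nonincreasing f f' c x y : has_deriv_on a b f f' ->
  (forall t, a <= t <= b -> c * f t + f' t <= 0) ->
  a <= x -> x <= y -> y <= b -> exp (c * y) * f y <= exp (c * x) * f x.
Proof.
  intros Hf Hc. apply (deriv_nonpos_nonincreasing a b (fun t => exp (c * t) * f t)
                        (fun t => c * exp (c * t) * f t + exp (c * t) * f' t)).
  - apply deriv_on_mul; [apply deriv_on_exp_scal | exact Hf].
  - intros t Ht. specialize (Hc t Ht). pose proof (exp_pos (c * t)). nra.
Qed.

(* Gronwall's argument applied to |z|^2 *)
Lemma linear_ode_zero (M : R -> mat) L z s : 0 <= L ->
  (forall t x, a <= t <= b -> vnorm n (mvec n (M t) x) <= L * vnorm n x) ->
  has_vderiv_on n a b z (fun t => mvec n (M t) (z t)) -> a <= s <= b -> veq n (z s) vzero ->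
  forall tau, a <= tau <= b -> veq n (z tau) vzero.
Proof.
  intros HL HM Hz Hs Hzs tau Ht.
  set (f := fun t => vdot n (z t) (z t)).
  set (f' := fun t => vdot n (mvec n (M t) (z t)) (z t) + vdot n (z t) (mvec n (M t) (z t))).
  assert (Df : has_deriv_on a b f f') by (now apply deriv_on_vdot).
  assert (Bf : forall t, a <= t <= b -> Rabs (f' t) <= 2 * L * f t).
  { intros t Ht'. unfold f', f. rewrite vdot_sym, <- vnorm_sq.
    replace (vdot n (z t) (mvec n (M t) (z t)) + vdot n (z t) (mvec n (M t) (z t)))
      with (2 * vdot n (z t) (mvec n (M t) (z t))) by ring.
    rewrite Rabs_mult, Rabs_right by lra.
    pose proof (Rabs_vdot_le n (z t) (mvec n (M t) (z t))). pose proof (HM t (z t) Ht').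
    pose proof (vnorm_nonneg n (z t)). pose proof (vnorm_nonneg n (mvec n (M t) (z t))). nra. }
  assert (f0 : f s = 0) by (apply rsum_eq0; intros; rewrite Hzs; unfold vzero; auto; ring).
  assert (fnn : forall t, 0 <= f t) by (intros; apply vdot_self_nonneg).
  assert (ftau : f tau <= 0).
  { destruct (Rle_dec s tau).
    - assert (H : exp (-(2*L) * tau) * f tau <= exp (-(2*L) * s) * f s).
      { apply (exp_weighted_nonincreasing f f'); auto; try lra.
        intros t Ht'. specialize (Bf t Ht'). pose proof (Rle_abs (f' t)). lra. }
      rewrite f0, Rmult_0_r in H. pose proof (exp_pos (-(2*L) * tau)). nra.
    - assert (H : exp ((2*L) * s) * - f s <= exp ((2*L) * tau) * - f tau).
      { apply (exp_weighted_nonincreasing (fun t => - f t) (fun t => - f' t)); try lra.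
        - now apply deriv_on_opp.
        - intros t Ht'. specialize (Bf t Ht'). pose proof (Rle_abs (- f' t)).
          rewrite Rabs_Ropp in *. lra. }
      rewrite f0 in H. pose proof (exp_pos ((2*L) * tau)). nra. }
  apply vnorm_eq0. unfold vnorm. fold (f tau).
  replace (f tau) with 0 by (specialize (fnn tau); lra). apply sqrt_0.
Qed.

End VectorDerivatives.

(** * The matrix exponential *)

(* the [+ 1] makes the bound [>= 1], as needed for [mpow N B 0 = idm] *)
Definition mabs_sum (N : nat) (B : mat) : R := rsum N (fun i => rsum N (fun l => Rabs (B i l))) + 1.

Definition mexp_coef (N : nat) (B : mat) (i j k : nat) : R := mpow N B k i j / INR (Factorial.fact k).

Lemma mabs_sum_ge1 N B : 1 <= mabs_sum N B.
Proof.
  unfold mabs_sum. assert (0 <= rsum N (fun i => rsum N (fun l => Rabs (B i l))))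
    by (apply rsum_nonneg; intros; apply rsum_nonneg; intros; apply Rabs_pos). lra.
Qed.

Lemma Rabs_mpow_le N B k i j : (i < N)%nat -> Rabs (mpow N B k i j) <= mabs_sum N B ^ k.
Proof.
  revert i j. induction k as [|k IH]; intros i j Hi.
  - simpl. unfold idm. destruct (Nat.eqb i j); rewrite ?Rabs_R1, ?Rabs_R0; lra.
  - change (mpow N B (S k) i j) with (rsum N (fun l => B i l * mpow N B k l j)).
    eapply Rle_trans; [apply Rabs_rsum_le|].
    apply Rle_trans with (rsum N (fun l => Rabs (B i l)) * mabs_sum N B ^ k).
    + rewrite <- rsum_scal_r. apply rsum_le. intros l Hl. rewrite Rabs_mult.
      apply Rmult_le_compat_l; [apply Rabs_pos | now apply IH].
    + simpl. apply Rmult_le_compat_r; [apply pow_le; pose proof (mabs_sum_ge1 N B); lra|].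
      unfold mabs_sum.
      pose proof (rsum_ge_term N (fun i => rsum N (fun l => Rabs (B i l))) i
                    ltac:(intros; apply rsum_nonneg; intros; apply Rabs_pos) Hi).
      lra.
Qed.

Lemma sum_f_R0_ge_term f k : (forall m, 0 <= f m) -> f k <= sum_f_R0 f k.
Proof.
  intros H. destruct k; simpl; [lra|].
  assert (0 <= sum_f_R0 f k) by (induction k; simpl; [apply H | specialize (H (S k)); lra]).
  lra.
Qed.

(* the coefficients are dominated by those of [exp (mabs_sum N B * x)] *)
Lemma CV_radius_mexp_coef N B i j x : (i < N)%nat -> Rbar_lt (Rabs x) (CV_radius (mexp_coef N B i j)).
Proof.
  intros Hi. set (r := Rabs x + 1). set (beta := mabs_sum N B).
  assert (Hr : 0 <= r) by (unfold r; pose proof (Rabs_pos x); lra).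
  assert (Hb : 1 <= beta) by apply mabs_sum_ge1.
  assert (Hbound : exists M, forall k, Rabs (mexp_coef N B i j k * r ^ k) <= M).
  { exists (exp (beta * r)). intros k.
    pose proof (INR_fact_lt_0 k).
    apply Rle_trans with ((beta * r) ^ k / INR (Factorial.fact k)).
    - unfold mexp_coef, Rdiv. rewrite !Rabs_mult.
      rewrite (Rabs_right (/ _)) by (left; now apply Rinv_0_lt_compat).
      rewrite Rpow_mult_distr, (Rabs_right (r ^ k)) by (apply Rle_ge, pow_le; auto).
      pose proof (Rabs_mpow_le N B k i j Hi) as Hp. fold beta in Hp.
      assert (0 < / INR (Factorial.fact k)) by (now apply Rinv_0_lt_compat).
      assert (0 <= r ^ k) by (apply pow_le; auto).
      apply Rle_trans with (beta ^ k * / INR (Factorial.fact k) * r ^ k); [|right; ring].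
      apply Rmult_le_compat_r; auto. apply Rmult_le_compat_r; lra.
    - eapply Rle_trans; [|apply (exp_ge_taylor (beta * r) k), Rmult_le_pos; lra].
      apply (sum_f_R0_ge_term (fun k => (beta * r) ^ k / INR (Factorial.fact k))).
      intros m. unfold Rdiv. apply Rmult_le_pos; [apply pow_le; nra|].
      left; apply Rinv_0_lt_compat, INR_fact_lt_0. }
  destruct (CV_radius_bounded (mexp_coef N B i j)) as [Hub _].
  specialize (Hub r Hbound). destruct (CV_radius (mexp_coef N B i j)); simpl in *; auto.
  unfold r in Hub. lra.
Qed.

Lemma mexp_PSeries N B i j x : (i < N)%nat -> mexp N B x i j = PSeries (mexp_coef N B i j) x.
Proof.
  intros Hi.
  assert (Hcv : Un_cv (fun M => sum_f_R0 (fun k => mpow N B k i j * x ^ k / INR (Factorial.fact k)) M)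
                      (PSeries (mexp_coef N B i j) x)).
  { pose proof (PSeries_correct (mexp_coef N B i j) x
                  (CV_radius_inside _ _ (CV_radius_mexp_coef N B i j x Hi))) as P.
    apply is_pseries_R, is_series_Reals in P.
    intros e He. destruct (P e He) as [M HM]. exists M. intros m Hm. specialize (HM m Hm).
    erewrite sum_eq; [exact HM|].
    intros. unfold mexp_coef. field. apply Rgt_not_eq, INR_fact_lt_0. }
  unfold mexp. pose proof (epsilon_spec (inhabits 0) _ (ex_intro _ _ Hcv)) as Hs.
  eapply UL_sequence; [exact Hs | exact Hcv].
Qed.

Lemma PS_derive_mexp_coef N B i j k :
  PS_derive (mexp_coef N B i j) k = rsum N (fun l => B i l * mexp_coef N B l j k).
Proof.
  unfold PS_derive, mexp_coef.
  change (mpow N B (S k) i j) with (rsum N (fun l => B i l * mpow N B k l j)).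
  change (Factorial.fact (S k)) with (S k * Factorial.fact k)%nat.
  unfold Rdiv. rewrite <- rsum_scal_r, <- rsum_scal_l. apply rsum_ext. intros l _.
  rewrite mult_INR. field. split; [apply Rgt_not_eq, INR_fact_lt_0 | apply not_0_INR; lia].
Qed.

Lemma PSeries_rsum_mexp_coef N B i j x m : (m <= N)%nat -> (i < N)%nat ->
  ex_pseries (fun k => rsum m (fun l => B i l * mexp_coef N B l j k)) x /\
  PSeries (fun k => rsum m (fun l => B i l * mexp_coef N B l j k)) x
  = rsum m (fun l => B i l * PSeries (mexp_coef N B l j) x).
Proof.
  intros Hm Hi. induction m as [|m IH].
  - simpl. split; [|apply PSeries_const_0].
    apply CV_radius_inside. rewrite CV_radius_const_0. simpl; auto.
  - destruct IH as [E1 E2]; [lia|].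
    assert (E3 : ex_pseries (PS_scal (B i m) (mexp_coef N B m j)) x).
    { apply ex_pseries_scal; [apply Rmult_comm|].
      apply CV_radius_inside, CV_radius_mexp_coef. lia. }
    assert (Ep : forall k, rsum (S m) (fun l => B i l * mexp_coef N B l j k)
                 = PS_plus (fun k => rsum m (fun l => B i l * mexp_coef N B l j k))
                           (PS_scal (B i m) (mexp_coef N B m j)) k) by reflexivity.
    split.
    + eapply ex_pseries_ext; [intros k; symmetry; apply Ep|]. now apply ex_pseries_plus.
    + rewrite (PSeries_ext _ _ x Ep), PSeries_plus, E2, PSeries_scal by auto. reflexivity.
Qed.

Lemma is_derive_mexp N B i j x : (i < N)%nat ->
  is_derive (fun t => mexp N B t i j) x (mmul N B (mexp N B x) i j).
Proof.
  intros Hi. apply (is_derive_ext (PSeries (mexp_coef N B i j))).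
  { intros t. now rewrite mexp_PSeries. }
  replace (mmul N B (mexp N B x) i j) with (PSeries (PS_derive (mexp_coef N B i j)) x).
  { apply is_derive_PSeries, CV_radius_mexp_coef; auto. }
  rewrite (PSeries_ext _ _ x (PS_derive_mexp_coef N B i j)).
  destruct (PSeries_rsum_mexp_coef N B i j x N (le_n N) Hi) as [_ ->].
  apply rsum_ext. intros l Hl. now rewrite mexp_PSeries.
Qed.

Lemma is_derive_mexp_shift N B i j c x : (i < N)%nat ->
  is_derive (fun s => mexp N B (s - c) i j) x (mmul N B (mexp N B (x - c)) i j).
Proof.
  intros Hi. evar (d : R). replace (mmul N B (mexp N B (x - c)) i j) with d.
  - apply (is_derive_comp (fun t => mexp N B t i j) (fun s => s - c)); [now apply is_derive_mexp|].
    auto_derive; [exact I | reflexivity].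
  - unfold d. simpl. unfold scal; simpl. unfold mult; simpl. ring.
Qed.

Lemma mexp_0 N B i j : (i < N)%nat -> mexp N B 0 i j = idm i j.
Proof. intros Hi. rewrite mexp_PSeries, PSeries_0; auto. unfold mexp_coef. simpl. field. Qed.

Lemma deriv_on_of_is_derive a b g g' : (forall x, is_derive g x (g' x)) -> has_deriv_on a b g g'.
Proof.
  intros H t _ e He. destruct (proj1 (is_derive_Reals g t (g' t)) (H t) e He) as [d P].
  exists d. split; [apply cond_pos|]. intros h Hh Hd _. now apply P.
Qed.

Lemma continuous_rsum n (F : nat -> R -> R) x : (forall i, (i < n)%nat -> continuous (F i) x) ->
  continuous (fun s => rsum n (fun i => F i s)) x.
Proof.
  induction n; intros H; simpl; [apply continuous_const|].
  apply (continuous_plus (fun s => rsum n (fun i => F i s)) (F n)); [apply IHn; intros|]; apply H; lia.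
Qed.

Lemma continuous_fnorm_mexp_shift n A c x : continuous (fun s => fnorm n n (mexp n A (s - c))) x.
Proof.
  apply continuous_sqrt_comp, (continuous_rsum n (fun i s => rsum n (fun j => mexp n A (s - c) i j ^ 2))).
  intros i Hi. apply (continuous_rsum n (fun j s => mexp n A (s - c) i j ^ 2)). intros j Hj.
  apply (continuous_ext (fun s => mexp n A (s - c) i j * mexp n A (s - c) i j)); [intros; simpl; ring|].
  assert (Hc : continuous (fun s => mexp n A (s - c) i j) x)
    by (apply continuity_pt_filterlim, derivable_continuous_pt; eexists;
        apply is_derive_Reals; now apply is_derive_mexp_shift).
  now apply (continuous_mult (fun s => mexp n A (s - c) i j) (fun s => mexp n A (s - c) i j)).
Qed.

Lemma continuous_fnorm_mexp_shift_mul n A c w x : continuous w x ->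
  continuous (fun s => fnorm n n (mexp n A (s - c)) * w s) x.
Proof.
  intros Hw. apply (continuous_mult (fun s => fnorm n n (mexp n A (s - c))) w); auto.
  apply continuous_fnorm_mexp_shift.
Qed.

Lemma integral_RInt g a b : a <= b -> (forall x, continuous g x) -> integral g a b = RInt g a b.
Proof.
  intros Hab Hc. unfold integral.
  assert (Hex : exists v, exists pr : Riemann_integrable g a b, RiemannInt pr = v).
  { assert (pr : Riemann_integrable g a b)
      by (apply ex_RInt_Reals_0, (ex_RInt_continuous (V := R_CompleteNormedModule)); intros; apply Hc).
    now exists (RiemannInt pr), pr. }
  destruct (epsilon_spec (inhabits 0) _ Hex) as [pr <-]. symmetry. apply RInt_Reals.
Qed.

Lemma deriv_on_RInt g a b c : (forall x, continuous g x) -> has_deriv_on a b (fun x => RInt g c x) g.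
Proof.
  intros Hc. apply deriv_on_of_is_derive. intros x.
  apply (is_derive_RInt g (RInt g c) c x); auto. apply filter_forall. intros y.
  apply (RInt_correct (V := R_CompleteNormedModule)), (ex_RInt_continuous (V := R_CompleteNormedModule)).
  intros; apply Hc.
Qed.

(** * A priori estimates for the homogeneous system *)

Definition closed_loop (AG : mat) (gamma : R) (K : R -> mat) (t : R) : mat :=
  msub AG (mscal gamma (K t)).

Definition riccati_rhs (n : nat) (AG Qh : mat) (gamma : R) (K : R -> mat) (t : R) : mat :=
  madd (mopp (madd (mmul n (K t) AG) (mmul n (mtr AG) (K t)))) (madd (mscal gamma (mmul n (K t) (K t))) Qh).

(* (MF) with the terms coming from [eta] collected into the constant forcings [f] and [g] *)
Definition lin_MF (n : nat) (T gamma : R) (AG S Qh Qg A : mat) (f g : vec) (m p y : R -> vec) : Prop :=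
  has_vderiv_on n 0 T m (fun t => vadd (vadd (mvec n AG (m t)) (mvec n S (y t))) (vscal gamma (p t))) /\
  has_vderiv_on n 0 T p (fun t => vadd (vsub (vopp (mvec n (mtr AG) (p t))) (mvec n Qh (m t))) f) /\
  has_vderiv_on n 0 T y (fun t => vsub (vadd (vopp (mvec n (mtr A) (y t))) (mvec n Qg (m t))) g).

Section ClosedLoop.
Variables (n : nat) (T gamma c1 c2 : R) (AG A S Qg Qh : mat) (K : R -> mat) (Phi : R -> R -> mat).
Hypothesis HT : 0 < T.
Hypothesis Hgamma : 0 < gamma.
Hypothesis HKd : forall i j, (i < n)%nat -> (j < n)%nat ->
  has_deriv_on 0 T (fun t => K t i j) (fun t => riccati_rhs n AG Qh gamma K t i j).
Hypothesis HKT : forall i j, (i < n)%nat -> (j < n)%nat -> K T i j = 0.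
Hypothesis HKsym : forall t, 0 <= t <= T -> forall i j, (i < n)%nat -> (j < n)%nat -> K t j i = K t i j.
Hypothesis HPhi0 : forall s, 0 <= s <= T -> meq n n (Phi s s) idm.
Hypothesis HPhid : forall s, 0 <= s <= T -> forall i j, (i < n)%nat -> (j < n)%nat ->
  has_deriv_on 0 T (fun t => Phi t s i j) (fun t => mmul n (closed_loop AG gamma K t) (Phi t s) i j).
Hypothesis Hc1 : forall t, 0 <= t <= T -> fnorm n n (K t) <= c1.
Hypothesis Hc2 : forall t s, 0 <= t <= T -> 0 <= s <= T -> fnorm n n (Phi t s) <= c2.

Lemma c1_nonneg : 0 <= c1.
Proof. pose proof (Hc1 0 ltac:(lra)). pose proof (fnorm_nonneg n n (K 0)). lra. Qed.

Lemma c2_nonneg : 0 <= c2.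
Proof. pose proof (Hc2 0 0 ltac:(lra) ltac:(lra)). pose proof (fnorm_nonneg n n (Phi 0 0)). lra. Qed.

Lemma mvec_Phi_diag r x i : 0 <= r <= T -> (i < n)%nat -> mvec n (Phi r r) x i = x i.
Proof.
  intros Hr Hi. rewrite <- (mvec_idm n x i Hi). apply mvec_ext; [|intros k _; reflexivity].
  intros; now apply HPhi0.
Qed.

Lemma vnorm_closed_loop_le t x : 0 <= t <= T ->
  vnorm n (mvec n (closed_loop AG gamma K t) x) <= (fnorm n n AG + gamma * c1) * vnorm n x.
Proof.
  intros Ht.
  rewrite (vnorm_ext n _ (vadd (mvec n AG x) (vopp (vscal gamma (mvec n (K t) x)))))
    by (intros i _; unfold closed_loop; vsimp; ring).
  eapply Rle_trans; [apply vnorm_add_le|]. rewrite vnorm_opp, vnorm_scal, Rabs_right by lra.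
  pose proof (vnorm_mvec_le n AG x). pose proof (vnorm_mvec_le n (K t) x).
  pose proof (Hc1 t Ht). pose proof (vnorm_nonneg n x). pose proof (fnorm_nonneg n n (K t)).
  assert (fnorm n n (K t) * vnorm n x <= c1 * vnorm n x) by (apply Rmult_le_compat_r; auto).
  nra.
Qed.

Lemma vderiv_on_Phi s w : 0 <= s <= T ->
  has_vderiv_on n 0 T (fun t => mvec n (Phi t s) w)
    (fun t => mvec n (closed_loop AG gamma K t) (mvec n (Phi t s) w)).
Proof.
  intros Hs. eapply vderiv_on_ext;
    [|apply (vderiv_on_mvec_const n 0 T (fun t => Phi t s)
              (fun t => mmul n (closed_loop AG gamma K t) (Phi t s)))].
  - intros t Ht i Hi. apply mvec_mmul.
  - intros; now apply HPhid.
Qed.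

(* two solutions of the same linear ODE agreeing at time s agree everywhere *)
Lemma Phi_cocycle tau s r v : 0 <= tau <= T -> 0 <= s <= T -> 0 <= r <= T ->
  veq n (mvec n (Phi tau s) (mvec n (Phi s r) v)) (mvec n (Phi tau r) v).
Proof.
  intros Htau Hs Hr.
  set (z := fun t => vsub (mvec n (Phi t s) (mvec n (Phi s r) v)) (mvec n (Phi t r) v)).
  assert (Hz : veq n (z tau) vzero).
  { apply (linear_ode_zero n 0 T (closed_loop AG gamma K) (fnorm n n AG + gamma * c1) z s); auto.
    - pose proof (fnorm_nonneg n n AG). pose proof c1_nonneg. nra.
    - intros; now apply vnorm_closed_loop_le.
    - eapply vderiv_on_ext; [|apply vderiv_on_sub; apply vderiv_on_Phi; auto].
      intros t Ht i Hi. unfold z. now rewrite mvec_vsub.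
    - intros i Hi. unfold z, vsub, vzero. rewrite mvec_Phi_diag; auto. ring. }
  intros i Hi. specialize (Hz i Hi). unfold z, vsub, vzero in Hz. lra.
Qed.

Lemma lim_in_Phi_r t r i k : 0 <= t <= T -> 0 <= r <= T -> (i < n)%nat -> (k < n)%nat ->
  lim_in 0 T r (fun h => Phi t (r + h) i k) (Phi t r i k).
Proof.
  intros Ht Hr Hi Hk. apply lim_in_eq0.
  apply (lim_in_le0 _ _ _ _ (fun h => rsum n (fun l => c2 * Rabs (Phi (r + h) r l k - Phi r r l k)))).
  - intros h Hh Hab.
    (* Phi t r = Phi t (r + h) Phi (r + h) r  and  Phi t (r + h) = Phi t (r + h) Phi r r *)
    assert (E1 : Phi t r i k = rsum n (fun l => Phi t (r + h) i l * Phi (r + h) r l k)).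
    { rewrite <- (mvec_unit n (Phi t r) k i Hk), <- (Phi_cocycle t (r + h) r); auto.
      apply rsum_ext. intros l Hl. now rewrite mvec_unit. }
    assert (E2 : Phi t (r + h) i k = rsum n (fun l => Phi t (r + h) i l * Phi r r l k)).
    { rewrite <- (mvec_unit n (Phi t (r + h)) k i Hk). apply rsum_ext. intros l Hl.
      now rewrite (HPhi0 r Hr l k). }
    rewrite E1, E2, <- rsum_sub. eapply Rle_trans; [apply Rabs_rsum_le|]. apply rsum_le. intros l Hl.
    replace (Phi t (r + h) i l * Phi r r l k - Phi t (r + h) i l * Phi (r + h) r l k)
      with (Phi t (r + h) i l * - (Phi (r + h) r l k - Phi r r l k)) by ring.
    rewrite Rabs_mult, Rabs_Ropp. apply Rmult_le_compat_r; [apply Rabs_pos|].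
    eapply Rle_trans; [apply (Rabs_entry_le_fnorm n _ i l Hi Hl) | apply Hc2; auto].
  - apply lim_in_rsum0. intros l Hl.
    assert (L0 : lim_in 0 T r (fun h => Rabs (Phi (r + h) r l k - Phi r r l k)) 0).
    { apply lim_in_abs0, (lim_in_eq0 _ _ _ (fun h => Phi (r + h) r l k)).
      exact (deriv_on_cont 0 T (fun t => Phi t r l k) _ r (HPhid r Hr l k Hl Hk) Hr). }
    pose proof (lim_in_scal _ _ _ c2 _ _ L0) as L1. now rewrite Rmult_0_r in L1.
Qed.

(* the variation-of-constants formula, in differential form *)
Lemma vderiv_on_Phi_transport t m m' : 0 <= t <= T -> has_vderiv_on n 0 T m m' ->
  has_vderiv_on n 0 T (fun r => mvec n (Phi t r) (m r))
    (fun r => mvec n (Phi t r) (vsub (m' r) (mvec n (closed_loop AG gamma K r) (m r)))).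
Proof.
  intros Ht Hm i Hi r Hr.
  set (w := fun tau => mvec n (Phi tau r) (m r)).
  assert (Dw := vderiv_on_Phi r (m r) Hr).
  set (Dh := fun k h => (m (r + h) k - m r k) / h - (w (r + h) k - w r k) / h).
  assert (Wr : veq n (w r) (m r)) by (intros l Hl; unfold w; now rewrite mvec_Phi_diag).
  assert (LD : forall k, (k < n)%nat ->
            lim_in 0 T r (Dh k) (vsub (m' r) (mvec n (closed_loop AG gamma K r) (m r)) k)).
  { intros k Hk. apply lim_in_sub; [exact (Hm k Hk r Hr)|].
    rewrite (mvec_ext n _ (closed_loop AG gamma K r) (m r) (w r) k); [exact (Dw k Hk r Hr)| |];
      [intros; reflexivity | intros l Hl; symmetry; now apply Wr]. }
  change (lim_in 0 T r (fun h => (mvec n (Phi t (r + h)) (m (r + h)) i - mvec n (Phi t r) (m r) i) / h)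
            (mvec n (Phi t r) (vsub (m' r) (mvec n (closed_loop AG gamma K r) (m r))) i)).
  eapply lim_in_ext; [|apply (lim_in_rsum _ _ _ n (fun k h => Phi t (r + h) i k * Dh k h))].
  - intros h Hh Hab. simpl.
    assert (Co : mvec n (Phi t r) (m r) i = mvec n (Phi t (r + h)) (w (r + h)) i)
      by (unfold w; symmetry; apply Phi_cocycle; auto).
    rewrite Co. unfold mvec at 1 2. unfold Rdiv. rewrite <- rsum_sub, <- rsum_scal_r.
    apply rsum_ext. intros k Hk. unfold Dh. rewrite (Wr k Hk). field. auto.
  - intros k Hk. apply lim_in_mul; [apply lim_in_Phi_r | apply LD]; auto.
Qed.

(* the Riccati equation makes p + K m solve the adjoint closed-loop equation, forced by K S y *)
Lemma riccati_cancel t pp mm yy i : 0 <= t <= T -> (i < n)%nat ->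
  mvec n (mtr (closed_loop AG gamma K t)) (vadd pp (mvec n (K t) mm)) i
  + (vadd (vsub (vopp (mvec n (mtr AG) pp)) (mvec n Qh mm))
      (vadd (mvec n (riccati_rhs n AG Qh gamma K t) mm)
            (mvec n (K t) (vadd (vadd (mvec n AG mm) (mvec n S yy)) (vscal gamma pp))))) i
  = mvec n (K t) (mvec n S yy) i.
Proof.
  intros Ht Hi. unfold closed_loop, riccati_rhs.
  change (mtr (msub AG (mscal gamma (K t)))) with (msub (mtr AG) (mscal gamma (mtr (K t)))).
  rewrite mvec_msub, mvec_mscal.
  rewrite (mvec_ext n (mtr (K t)) (K t) _ (vadd pp (mvec n (K t) mm)) i);
    [| intros k Hk; unfold mtr; now apply HKsym | intros q _; reflexivity].
  vsimp. ring.
Qed.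

Section Homogeneous.
Variables (m p y : R -> vec) (c3 c4 : R).
Hypothesis Hsys : lin_MF n T gamma AG S Qh Qg A vzero vzero m p y.
Hypothesis Hm0 : veq n (m 0) vzero.
Hypothesis HpT : veq n (p T) vzero.
Hypothesis HyT : veq n (y T) vzero.
Hypothesis Hc3 : forall t, 0 <= t <= T -> integral (fun s => fnorm n n (mexp n A (s - t)) * s) t T <= c3.
Hypothesis Hc4 : forall t, 0 <= t <= T ->
  integral (fun s => fnorm n n (mexp n A (s - t)) * (T * s - s ^ 2 / 2)) t T <= c4.

Definition phi (t : R) : vec := vadd (p t) (mvec n (K t) (m t)).

Lemma phi_deriv : has_vderiv_on n 0 T phi
  (fun t => vadd (vsub (vopp (mvec n (mtr AG) (p t))) (mvec n Qh (m t)))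
     (vadd (mvec n (riccati_rhs n AG Qh gamma K t) (m t))
           (mvec n (K t) (vadd (vadd (mvec n AG (m t)) (mvec n S (y t))) (vscal gamma (p t)))))).
Proof.
  destruct Hsys as [Hm [Hp _]]. apply vderiv_on_add.
  - eapply vderiv_on_ext; [|exact Hp]. intros t _ i _. vsimp. ring.
  - now apply vderiv_on_mvec.
Qed.

Lemma vderiv_on_mexp_adjoint t :
  has_vderiv_on n 0 T (fun s => mvec n (mtr (mexp n A (s - t))) (y s))
    (fun s => mvec n (mtr (mexp n A (s - t))) (mvec n Qg (m s))).
Proof.
  destruct Hsys as [_ [_ Hy]].
  eapply vderiv_on_ext;
    [|apply (vderiv_on_mvec n 0 T (fun s => mtr (mexp n A (s - t)))
                              (fun s => mtr (mmul n A (mexp n A (s - t))))); [|exact Hy]].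
  - intros s _ i Hi. vsimp.
    rewrite (mvec_ext n (mtr (mmul n A (mexp n A (s - t)))) (mmul n (mtr (mexp n A (s - t))) (mtr A))
               (y s) (y s) i); [|intros; apply mtr_mmul | intros q _; reflexivity].
    vsimp. ring.
  - intros i j Hi Hj. apply deriv_on_of_is_derive. intros x. now apply is_derive_mexp_shift.
Qed.

Lemma vnorm_mexp_adjoint_increment t : 0 <= t <= T ->
  vnorm n (vsub (mvec n (mtr (mexp n A (T - t))) (y T)) (mvec n (mtr (mexp n A (t - t))) (y t)))
  = vnorm n (y t).
Proof.
  intros Ht. rewrite <- (vnorm_opp n (y t)). apply vnorm_ext. intros i Hi. vsimp.
  rewrite (mvec_ext n _ (mtr (mexp n A (T - t))) (y T) vzero i), mvec_vzero; [|reflexivity | exact HyT].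
  rewrite (mvec_ext n (mtr (mexp n A (t - t))) idm (y t) (y t) i), mvec_idm;
    auto; [ring| |intros q _; reflexivity].
  intros k Hk. unfold mtr. rewrite Rminus_diag, mexp_0 by auto. unfold idm.
  destruct (Nat.eqb_spec k i), (Nat.eqb_spec i k); auto; lia.
Qed.

Section BoundedY.
Variable Y : R.
Hypothesis HY : forall t, 0 <= t <= T -> vnorm n (y t) <= Y.

Lemma Y_nonneg : 0 <= Y.
Proof. pose proof (HY 0 ltac:(lra)). pose proof (vnorm_nonneg n (y 0)). lra. Qed.

(* duality: tau |-> <Phi(tau, r) phi(r), phi(tau)> has derivative <Phi w, K S y> and vanishes at T *)
Lemma phi_bound r : 0 <= r <= T -> vnorm n (phi r) <= c1 * c2 * fnorm n n S * Y * (T - r).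
Proof.
  intros Hr. set (w := phi r).
  set (chi := fun tau => vdot n (mvec n (Phi tau r) w) (phi tau)).
  set (chi' := fun tau => vdot n (mvec n (Phi tau r) w) (mvec n (K tau) (mvec n S (y tau)))).
  assert (Dchi : has_deriv_on 0 T chi chi').
  { eapply deriv_on_ext; [|apply (deriv_on_vdot n 0 T _ _ _ _ (vderiv_on_Phi r w Hr) phi_deriv)].
    intros tau Htau. unfold chi'. rewrite vdot_mvec, <- vdot_addr.
    apply vdot_ext; [intros q _; reflexivity|]. intros i Hi.
    rewrite vadd_app. unfold phi. now rewrite riccati_cancel. }
  set (C := c2 * vnorm n w * (c1 * fnorm n n S * Y)).
  assert (Bchi : forall tau, 0 <= tau <= T -> Rabs (chi' tau) <= C).
  { intros tau Htau. unfold chi', C. eapply Rle_trans; [apply Rabs_vdot_le|].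
    apply Rmult_le_compat; [apply vnorm_nonneg | apply vnorm_nonneg | |].
    - eapply Rle_trans; [apply vnorm_mvec_le|].
      apply Rmult_le_compat_r; [apply vnorm_nonneg | apply Hc2; auto].
    - eapply Rle_trans; [apply vnorm_mvec_le|]. rewrite Rmult_assoc.
      apply Rmult_le_compat; [apply fnorm_nonneg | apply vnorm_nonneg | apply Hc1; auto|].
      eapply Rle_trans; [apply vnorm_mvec_le|].
      apply Rmult_le_compat_l; [apply fnorm_nonneg | apply HY; auto]. }
  assert (DC : has_deriv_on 0 T (fun tau => C * tau) (fun _ => C)).
  { eapply deriv_on_ext; [|apply deriv_on_scal, deriv_on_id]. intros; simpl; ring. }
  pose proof (mean_value_ineq 0 T chi chi' _ _ r T Dchi DC Bchi ltac:(lra) ltac:(lra) ltac:(lra)) as Hmv.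
  assert (E1 : chi T = 0).
  { apply rsum_eq0. intros i Hi. unfold phi.
    rewrite vadd_app, HpT, (mvec_eq0 n (K T)) by (auto; intros ? ? ? ?; now apply HKT). unfold vzero. ring. }
  assert (E2 : chi r = vnorm n w * vnorm n w).
  { rewrite vnorm_sq. apply vdot_ext; [|intros q _; reflexivity]. intros i Hi. now apply mvec_Phi_diag. }
  rewrite E1, E2, Rminus_0_l, Rabs_Ropp, Rabs_right in Hmv
    by (apply Rle_ge, Rmult_le_pos; apply vnorm_nonneg).
  unfold C in Hmv. fold w.
  pose proof (vnorm_nonneg n w). pose proof c1_nonneg. pose proof c2_nonneg. pose proof Y_nonneg.
  pose proof (fnorm_nonneg n n S).
  destruct (Req_dec (vnorm n w) 0) as [Hw|Hw].
  - rewrite Hw. repeat apply Rmult_le_pos; lra.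
  - apply Rmult_le_reg_l with (vnorm n w); [lra | nra].
Qed.

Lemma m_bound t : 0 <= t <= T ->
  vnorm n (m t) <= c2 * fnorm n n S * Y * (t + gamma * c1 * c2 * (T * t - t * t / 2)).
Proof.
  intros Ht. destruct Hsys as [Hm _].
  pose proof c1_nonneg. pose proof c2_nonneg. pose proof Y_nonneg. pose proof (fnorm_nonneg n n S).
  set (k1 := c2 * fnorm n n S * Y). set (k2 := gamma * c1 * c2 * c2 * fnorm n n S * Y).
  assert (Dpoly : has_deriv_on 0 T (fun r => k1 * r + k2 * (T * r - r * r / 2)) (fun r => k1 + k2 * (T - r))).
  { apply deriv_on_of_is_derive. intros x. auto_derive; [exact I | field]. }
  assert (Hb : forall r, 0 <= r <= T ->
    vnorm n (mvec n (Phi t r) (vsub (vadd (vadd (mvec n AG (m r)) (mvec n S (y r))) (vscal gamma (p r)))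
                                   (mvec n (closed_loop AG gamma K r) (m r)))) <= k1 + k2 * (T - r)).
  { intros r Hr. eapply Rle_trans; [apply vnorm_mvec_le|].
    (* m' - (AG - gamma K) m = S y + gamma phi *)
    rewrite (vnorm_ext n _ (vadd (mvec n S (y r)) (vscal gamma (phi r))))
      by (intros i Hi; unfold closed_loop, phi; vsimp; ring).
    apply Rle_trans with (c2 * (fnorm n n S * Y + gamma * (c1 * c2 * fnorm n n S * Y * (T - r))));
      [|unfold k1, k2; right; ring].
    apply Rmult_le_compat; [apply fnorm_nonneg | apply vnorm_nonneg | apply Hc2; auto|].
    eapply Rle_trans; [apply vnorm_add_le|]. apply Rplus_le_compat.
    - eapply Rle_trans; [apply vnorm_mvec_le|].
      apply Rmult_le_compat_l; [apply fnorm_nonneg | apply HY; auto].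
    - rewrite vnorm_scal, Rabs_right by lra.
      apply Rmult_le_compat_l; [lra | apply phi_bound; auto]. }
  pose proof (vmean_value_ineq n 0 T _ _ _ _ 0 t (vderiv_on_Phi_transport t m _ Ht Hm) Dpoly Hb
                ltac:(lra) ltac:(lra) ltac:(lra)) as Hmv.
  rewrite (vnorm_ext n (m t) (vsub (mvec n (Phi t t) (m t)) (mvec n (Phi t 0) (m 0)))).
  - eapply Rle_trans; [apply Hmv|]. unfold k1, k2. right. field.
  - intros i Hi. vsimp. rewrite mvec_Phi_diag by auto.
    rewrite (mvec_ext n _ (Phi t 0) (m 0) vzero i), mvec_vzero; [ring | reflexivity | exact Hm0].
Qed.

Lemma y_bound t : 0 <= t <= T ->
  vnorm n (y t) <= fnorm n n Qg * c2 * fnorm n n S * Y * (c3 + gamma * c1 * c2 * c4).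
Proof.
  intros Ht.
  pose proof c1_nonneg. pose proof c2_nonneg. pose proof Y_nonneg.
  pose proof (fnorm_nonneg n n S). pose proof (fnorm_nonneg n n Qg).
  set (E := fun s => mexp n A (s - t)).
  set (g3 := fun s => fnorm n n (E s) * s).
  set (g4 := fun s => fnorm n n (E s) * (T * s - s ^ 2 / 2)).
  assert (C3 : forall x, continuous g3 x)
    by (intros; apply continuous_fnorm_mexp_shift_mul, continuous_id).
  assert (C4 : forall x, continuous g4 x)
    by (intros; apply continuous_fnorm_mexp_shift_mul, continuity_pt_filterlim, derivable_continuous_pt; reg).
  set (k0 := fnorm n n Qg * c2 * fnorm n n S * Y).
  assert (Hk0 : 0 <= k0) by (unfold k0; repeat apply Rmult_le_pos; auto).
  assert (DB : has_deriv_on 0 T (fun s => k0 * (RInt g3 t s + gamma * c1 * c2 * RInt g4 t s))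
                                (fun s => k0 * (g3 s + gamma * c1 * c2 * g4 s))).
  { apply deriv_on_scal, deriv_on_add; [|apply deriv_on_scal]; now apply deriv_on_RInt. }
  assert (Hb : forall s, 0 <= s <= T ->
    vnorm n (mvec n (mtr (E s)) (mvec n Qg (m s))) <= k0 * (g3 s + gamma * c1 * c2 * g4 s)).
  { intros s Hs. eapply Rle_trans; [apply vnorm_mvec_le|]. rewrite fnorm_mtr.
    eapply Rle_trans; [apply Rmult_le_compat_l; [apply fnorm_nonneg | apply vnorm_mvec_le]|].
    eapply Rle_trans;
      [apply Rmult_le_compat_l; [apply fnorm_nonneg|];
       apply Rmult_le_compat_l; [apply fnorm_nonneg | apply m_bound; auto]|].
    right. unfold k0, g3, g4. simpl. field. }
  pose proof (vmean_value_ineq n 0 T _ _ _ _ t T (vderiv_on_mexp_adjoint t) DB Hb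
                ltac:(lra) ltac:(lra) ltac:(lra)) as Hmv.
  cbv beta in Hmv. rewrite vnorm_mexp_adjoint_increment, !RInt_point in Hmv by auto. unfold zero in Hmv; simpl in Hmv.
  rewrite <- !integral_RInt in Hmv by (auto; lra).
  specialize (Hc3 t Ht). specialize (Hc4 t Ht).
  change (integral g3 t T <= c3) in Hc3. change (integral g4 t T <= c4) in Hc4.
  eapply Rle_trans; [apply Hmv|]. fold k0.
  assert (gamma * c1 * c2 * integral g4 t T <= gamma * c1 * c2 * c4)
    by (apply Rmult_le_compat_l; [repeat apply Rmult_le_pos; lra | exact Hc4]).
  assert (k0 * (integral g3 t T + gamma * c1 * c2 * integral g4 t T) <= k0 * (c3 + gamma * c1 * c2 * c4))
    by (apply Rmult_le_compat_l; lra).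
  lra.
Qed.

End BoundedY.

Lemma hom_zero : c2 * fnorm n n S * fnorm n n Qg * (c3 + gamma * c1 * c2 * c4) < 1 ->
  forall t, 0 <= t <= T -> veq n (m t) vzero /\ veq n (p t) vzero /\ veq n (y t) vzero.
Proof.
  intros Hsmall.
  destruct (cont_in_max 0 T (fun s => vnorm n (y s)) ltac:(lra)) as [x0 [Hx0 Hmax]].
  { destruct Hsys as [_ [_ Hy]]. intros; eapply cont_in_vnorm; eauto. }
  set (Y := vnorm n (y x0)).
  assert (HY : forall t, 0 <= t <= T -> vnorm n (y t) <= Y) by (intros; apply Hmax; auto).
  assert (Y0 : Y = 0).
  { pose proof (y_bound Y HY x0 Hx0) as Hb. fold Y in Hb.
    pose proof (vnorm_nonneg n (y x0)) as HY0. fold Y in HY0.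
    set (kappa := c2 * fnorm n n S * fnorm n n Qg * (c3 + gamma * c1 * c2 * c4)) in Hsmall.
    replace (fnorm n n Qg * c2 * fnorm n n S * Y * (c3 + gamma * c1 * c2 * c4)) with (kappa * Y) in Hb
      by (unfold kappa; ring).
    nra. }
  intros t Ht. rewrite Y0 in HY.
  assert (Hmt : veq n (m t) vzero).
  { apply vnorm_eq0. pose proof (m_bound 0 HY t Ht). pose proof (vnorm_nonneg n (m t)). nra. }
  assert (Hph : veq n (phi t) vzero).
  { apply vnorm_eq0. pose proof (phi_bound 0 HY t Ht). pose proof (vnorm_nonneg n (phi t)). nra. }
  split; [|split]; auto.
  - intros i Hi. specialize (Hph i Hi). unfold phi in Hph. rewrite vadd_app in Hph.
    rewrite (mvec_ext n _ (K t) (m t) vzero i), mvec_vzero in Hph; [|reflexivity | exact Hmt].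
    unfold vzero in *. lra.
  - apply vnorm_eq0. specialize (HY t Ht). pose proof (vnorm_nonneg n (y t)). lra.
Qed.

End Homogeneous.
End ClosedLoop.

(** * Linear algebra: injective square systems are solvable *)

Definition skip (j0 j : nat) : nat := if Nat.ltb j j0 then j else S j.
Definition unskip (j0 j : nat) : nat := if Nat.ltb j j0 then j else Nat.pred j.

Lemma unskip_skip j0 j : unskip j0 (skip j0 j) = j.
Proof.
  unfold unskip, skip. destruct (Nat.ltb_spec j j0);
    [destruct (Nat.ltb_spec j j0) | destruct (Nat.ltb_spec (S j) j0)]; lia.
Qed.

Lemma skip_neq j0 j : skip j0 j <> j0.
Proof. unfold skip. destruct (Nat.ltb_spec j j0); lia. Qed.

Lemma skip_le j0 j m : (j <= m)%nat -> (skip j0 j <= S m)%nat.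
Proof. unfold skip. destruct (Nat.ltb_spec j j0); lia. Qed.

Lemma rsum_skip m j0 f : (j0 <= m)%nat -> rsum (S m) f = f j0 + rsum m (fun j => f (skip j0 j)).
Proof.
  induction m as [|m IH]; intros H.
  - replace j0 with 0%nat by lia. simpl. lra.
  - change (rsum (S (S m)) f) with (rsum (S m) f + f (S m)).
    destruct (Nat.eq_dec j0 (S m)) as [->|Hne].
    + rewrite (rsum_ext (S m) (fun j => f (skip (S m) j)) f); [simpl; lra|].
      intros i Hi. unfold skip. destruct (Nat.ltb_spec i (S m)); [reflexivity | lia].
    + rewrite IH by lia. simpl.
      replace (skip j0 m) with (S m) by (unfold skip; destruct (Nat.ltb_spec m j0); lia). lra.
Qed.

Lemma rsum_lin_dep k (V : nat -> vec) : exists c : nat -> R, (exists j, (j <= k)%nat /\ c j <> 0) /\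
  forall i, (i < k)%nat -> rsum (S k) (fun j => c j * V j i) = 0.
Proof.
  revert V. induction k as [|k IH]; intros V.
  { exists (fun _ => 1). split; [exists 0%nat; split; [lia | lra] | intros; lia]. }
  destruct (classic (exists j0, (j0 <= S k)%nat /\ V j0 k <> 0)) as [[j0 [Hj0 Hv]]|Hno].
  - (* eliminate the last coordinate using the pivot V j0 *)
    set (W := fun j i => V (skip j0 j) i - V (skip j0 j) k / V j0 k * V j0 i).
    destruct (IH W) as [d [[j1 [Hj1 Hd]] Hsum]].
    set (c0 := - rsum (S k) (fun l => d l * V (skip j0 l) k) / V j0 k).
    set (c := fun j => if Nat.eqb j j0 then c0 else d (unskip j0 j)).
    assert (Hc : forall l, c (skip j0 l) = d l).
    { intros l. unfold c. destruct (Nat.eqb_spec (skip j0 l) j0) as [E|_];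
        [now apply skip_neq in E | now rewrite unskip_skip]. }
    exists c. split.
    + exists (skip j0 j1). split; [now apply skip_le|]. now rewrite Hc.
    + intros i Hi. rewrite (rsum_skip (S k) j0) by auto.
      rewrite (rsum_ext (S k) (fun j => c (skip j0 j) * V (skip j0 j) i) (fun j => d j * V (skip j0 j) i))
        by (intros; now rewrite Hc).
      replace (c j0) with c0 by (unfold c; now rewrite Nat.eqb_refl). unfold c0.
      destruct (Nat.eq_dec i k) as [->|Hik]; [field; auto|].
      specialize (Hsum i ltac:(lia)). unfold W in Hsum.
      assert (E : rsum (S k) (fun j => d j * (V (skip j0 j) i - V (skip j0 j) k / V j0 k * V j0 i))
                  = rsum (S k) (fun j => d j * V (skip j0 j) i)
                    - rsum (S k) (fun l => d l * V (skip j0 l) k) / V j0 k * V j0 i).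
      { unfold Rdiv. rewrite <- !rsum_scal_r, <- rsum_sub. apply rsum_ext; intros; ring. }
      rewrite E in Hsum. unfold Rdiv in *. lra.
  - (* the last coordinate vanishes identically: drop the last vector *)
    destruct (IH V) as [d [[j1 [Hj1 Hd]] Hsum]].
    exists (fun j => if Nat.ltb j (S k) then d j else 0). split.
    + exists j1. split; [lia|]. destruct (Nat.ltb_spec j1 (S k)); [auto | lia].
    + intros i Hi. change (rsum (S (S k)) ?F) with (rsum (S k) F + F (S k)). cbv beta.
      rewrite Nat.ltb_irrefl, (rsum_ext (S k) _ (fun j => d j * V j i))
        by (intros j Hj; destruct (Nat.ltb_spec j (S k)); [auto | lia]).
      destruct (Nat.eq_dec i k) as [->|Hik].
      * rewrite rsum_eq0; [ring|]. intros j Hj. destruct (Req_dec (V j k) 0) as [->|Hne]; [ring|].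
        exfalso. apply Hno. exists j. split; [lia | auto].
      * rewrite Hsum by lia. ring.
Qed.

Lemma square_inj_surj k (L : mat) :
  (forall u : vec, (forall a, (a < k)%nat -> rsum k (fun b => L a b * u b) = 0) ->
                   forall b, (b < k)%nat -> u b = 0) ->
  forall c : vec, exists u : vec, forall a, (a < k)%nat -> rsum k (fun b => L a b * u b) = c a.
Proof.
  intros Hinj c.
  destruct (rsum_lin_dep k (fun j a => if Nat.ltb j k then L a j else c a)) as [d [[j1 [Hj1 Hd]] Hsum]].
  assert (Hsum' : forall a, (a < k)%nat -> rsum k (fun b => d b * L a b) + d k * c a = 0).
  { intros a Ha. rewrite <- (Hsum a Ha). simpl. rewrite Nat.ltb_irrefl. f_equal.
    apply rsum_ext. intros b Hb. destruct (Nat.ltb_spec b k); [reflexivity | lia]. }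
  (* injectivity forces the coefficient of c to be nonzero *)
  assert (Hdk : d k <> 0).
  { intros Hk. assert (Hu : forall b, (b < k)%nat -> d b = 0).
    { apply Hinj. intros a Ha. rewrite <- (Hsum' a Ha), Hk.
      rewrite (rsum_ext k _ (fun b => d b * L a b)) by (intros; ring). ring. }
    destruct (Nat.eq_dec j1 k) as [->|Hne]; [auto | apply Hd, Hu; lia]. }
  exists (fun b => - d b / d k). intros a Ha. specialize (Hsum' a Ha).
  unfold Rdiv. rewrite (rsum_ext k _ (fun b => (d b * L a b) * (- / d k))) by (intros; ring).
  rewrite rsum_scal_r. replace (rsum k (fun b => d b * L a b)) with (- (d k * c a)) by lra.
  field. auto.
Qed.

(** * Solving the affine system through the matrix exponential *)

(* (m, p, y, s) in R^n x R^n x R^n x R, the constant coordinate s carrying the forcing *)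
Definition mf_dim (n : nat) : nat := (n + (n + (n + 1)))%nat.

Definition blk (n i : nat) : nat :=
  if Nat.ltb i n then 0 else if Nat.ltb i (n + n) then 1 else if Nat.ltb i (n + (n + n)) then 2 else 3.
Definition blk_off (n i : nat) : nat :=
  if Nat.ltb i n then i else if Nat.ltb i (n + n) then (i - n)%nat
  else if Nat.ltb i (n + (n + n)) then (i - (n + n))%nat else 0.

Lemma blk_m n k : (k < n)%nat -> blk n k = 0%nat /\ blk_off n k = k.
Proof. intros. unfold blk, blk_off. destruct (Nat.ltb_spec k n); [auto | lia]. Qed.

Lemma blk_p n k : (k < n)%nat -> blk n (n + k) = 1%nat /\ blk_off n (n + k) = k.
Proof.
  intros. unfold blk, blk_off.
  destruct (Nat.ltb_spec (n + k) n), (Nat.ltb_spec (n + k) (n + n)); split; lia.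
Qed.

Lemma blk_y n k : (k < n)%nat -> blk n (n + (n + k)) = 2%nat /\ blk_off n (n + (n + k)) = k.
Proof.
  intros. unfold blk, blk_off.
  destruct (Nat.ltb_spec (n + (n + k)) n), (Nat.ltb_spec (n + (n + k)) (n + n)),
    (Nat.ltb_spec (n + (n + k)) (n + (n + n))); split; lia.
Qed.

Lemma blk_s n : blk n (n + (n + n)) = 3%nat.
Proof.
  unfold blk. destruct (Nat.ltb_spec (n + (n + n)) n), (Nat.ltb_spec (n + (n + n)) (n + n)),
    (Nat.ltb_spec (n + (n + n)) (n + (n + n))); lia.
Qed.

Lemma rsum_mf_dim n f : rsum (mf_dim n) f =
  rsum n f + rsum n (fun l => f (n + l)%nat) + rsum n (fun l => f (n + (n + l))%nat) + f (n + (n + n))%nat.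
Proof. unfold mf_dim. rewrite rsum_split, rsum_split, Nat.add_1_r. simpl. lra. Qed.

Definition mf_init (n : nat) (m0 u : vec) (s : R) : vec := fun j =>
  if Nat.ltb j n then m0 j else if Nat.ltb j (n + (n + n)) then u (j - n)%nat else s.

Lemma mf_init_m n m0 u s k : (k < n)%nat -> mf_init n m0 u s k = m0 k.
Proof. intros. unfold mf_init. destruct (Nat.ltb_spec k n); [auto | lia]. Qed.

Lemma mf_init_u n m0 u s b : (b < n + n)%nat -> mf_init n m0 u s (n + b)%nat = u b.
Proof.
  intros. unfold mf_init. destruct (Nat.ltb_spec (n + b) n), (Nat.ltb_spec (n + b) (n + (n + n)));
    try lia. f_equal; lia.
Qed.

Lemma mf_init_s n m0 u s : mf_init n m0 u s (n + (n + n))%nat = s.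
Proof.
  unfold mf_init. destruct (Nat.ltb_spec (n + (n + n)) n), (Nat.ltb_spec (n + (n + n)) (n + (n + n)));
    auto; lia.
Qed.

Lemma mf_init_split n m0 u :
  veq (mf_dim n) (mf_init n m0 u 1) (vadd (mf_init n m0 vzero 1) (mf_init n vzero u 0)).
Proof.
  intros j _. unfold mf_init, vadd, vzero.
  destruct (Nat.ltb j n); [ring|]. destruct (Nat.ltb j (n + (n + n))); ring.
Qed.

Lemma mvec_mf_init_u n (E : mat) u i :
  mvec (mf_dim n) E (mf_init n vzero u 0) i = rsum (n + n) (fun b => E i (n + b)%nat * u b).
Proof.
  unfold mvec. rewrite rsum_mf_dim, rsum_split, mf_init_s.
  rewrite (rsum_eq0 n (fun l => E i l * mf_init n vzero u 0 l))
    by (intros; rewrite mf_init_m; auto; unfold vzero; ring).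
  rewrite (rsum_ext n (fun l => E i (n + l)%nat * mf_init n vzero u 0 (n + l)%nat)
                     (fun l => E i (n + l)%nat * u l)) by (intros; rewrite mf_init_u; auto; lia).
  rewrite (rsum_ext n (fun l => E i (n + (n + l))%nat * mf_init n vzero u 0 (n + (n + l))%nat)
                     (fun l => E i (n + (n + l))%nat * u (n + l)%nat))
    by (intros; rewrite mf_init_u; auto; lia).
  ring.
Qed.

Definition lin_MF_bc (n : nat) (T : R) (m0 : vec) (m p y : R -> vec) : Prop :=
  veq n (m 0) m0 /\ veq n (p T) vzero /\ veq n (y T) vzero.

Definition lin_MF_hom_unique (n : nat) (T gamma : R) (AG S Qh Qg A : mat) : Prop :=
  forall m p y, lin_MF n T gamma AG S Qh Qg A vzero vzero m p y -> lin_MF_bc n T vzero m p y ->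
  forall t, 0 <= t <= T -> veq n (m t) vzero /\ veq n (p t) vzero /\ veq n (y t) vzero.

Lemma lin_MF_forcing_ext n T gamma AG S Qh Qg A f g f' g' m p y : veq n f f' -> veq n g g' ->
  lin_MF n T gamma AG S Qh Qg A f g m p y -> lin_MF n T gamma AG S Qh Qg A f' g' m p y.
Proof.
  intros Ef Eg [Dm [Dp Dy]]. split; [exact Dm | split].
  - eapply vderiv_on_ext; [|exact Dp]. intros t _ i Hi. vsimp. now rewrite Ef.
  - eapply vderiv_on_ext; [|exact Dy]. intros t _ i Hi. vsimp. now rewrite Eg.
Qed.

Section AffineFlow.
Variables (n : nat) (T gamma : R) (AG S Qh Qg A : mat) (f g : vec).

Definition mf_block (bi bj i j : nat) : R :=
  match bi, bj with
  | 0, 0 => AG i j | 0, 1 => gamma * idm i j | 0, 2 => S i j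
  | 1, 0 => - Qh i j | 1, 1 => - AG j i | 1, 3 => f i
  | 2, 0 => Qg i j | 2, 2 => - A j i | 2, 3 => - g i
  | _, _ => 0 end.

Definition mf_matrix : mat := fun i j => mf_block (blk n i) (blk n j) (blk_off n i) (blk_off n j).

Ltac blk_simpl := repeat match goal with
  | |- context [blk n (n + (n + n))] => rewrite (blk_s n)
  | H : (?k < n)%nat |- context [blk n (n + (n + ?k))] => rewrite (proj1 (blk_y n k H)), (proj2 (blk_y n k H))
  | H : (?k < n)%nat |- context [blk n (n + ?k)] => rewrite (proj1 (blk_p n k H)), (proj2 (blk_p n k H))
  | H : (?k < n)%nat |- context [blk n ?k] => rewrite (proj1 (blk_m n k H)), (proj2 (blk_m n k H))
  end.

Lemma mvec_mf_matrix_m z k : (k < n)%nat ->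
  mvec (mf_dim n) mf_matrix z k
  = mvec n AG z k + mvec n S (fun l => z (n + (n + l))%nat) k + gamma * z (n + k)%nat.
Proof.
  intros Hk. unfold mvec. rewrite rsum_mf_dim.
  rewrite (rsum_ext n (fun l => mf_matrix k l * z l) (fun l => AG k l * z l))
    by (intros l Hl; unfold mf_matrix; blk_simpl; reflexivity).
  rewrite (rsum_ext n (fun l => mf_matrix k (n + l)%nat * z (n + l)%nat)
                     (fun l => gamma * (idm k l * z (n + l)%nat)))
    by (intros l Hl; unfold mf_matrix; blk_simpl; simpl; ring).
  rewrite (rsum_ext n (fun l => mf_matrix k (n + (n + l))%nat * z (n + (n + l))%nat)
                     (fun l => S k l * z (n + (n + l))%nat))
    by (intros l Hl; unfold mf_matrix; blk_simpl; reflexivity).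
  unfold mf_matrix at 1. blk_simpl. simpl. rewrite rsum_scal_l, rsum_idm_l; auto. ring.
Qed.

Lemma mvec_mf_matrix_p z k : (k < n)%nat ->
  mvec (mf_dim n) mf_matrix z (n + k)%nat
  = - mvec n Qh z k - mvec n (mtr AG) (fun l => z (n + l)%nat) k + f k * z (n + (n + n))%nat.
Proof.
  intros Hk. unfold mvec. rewrite rsum_mf_dim.
  rewrite (rsum_ext n (fun l => mf_matrix (n + k)%nat l * z l) (fun l => - (Qh k l * z l)))
    by (intros l Hl; unfold mf_matrix; blk_simpl; simpl; ring).
  rewrite (rsum_ext n (fun l => mf_matrix (n + k)%nat (n + l)%nat * z (n + l)%nat)
                     (fun l => - (mtr AG k l * z (n + l)%nat)))
    by (intros l Hl; unfold mf_matrix; blk_simpl; simpl; unfold mtr; ring).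
  rewrite (rsum_eq0 n (fun l => mf_matrix (n + k)%nat (n + (n + l))%nat * z (n + (n + l))%nat))
    by (intros l Hl; unfold mf_matrix; blk_simpl; simpl; ring).
  unfold mf_matrix at 1. blk_simpl. simpl. rewrite !rsum_opp. ring.
Qed.

Lemma mvec_mf_matrix_y z k : (k < n)%nat ->
  mvec (mf_dim n) mf_matrix z (n + (n + k))%nat
  = mvec n Qg z k - mvec n (mtr A) (fun l => z (n + (n + l))%nat) k - g k * z (n + (n + n))%nat.
Proof.
  intros Hk. unfold mvec. rewrite rsum_mf_dim.
  rewrite (rsum_ext n (fun l => mf_matrix (n + (n + k))%nat l * z l) (fun l => Qg k l * z l))
    by (intros l Hl; unfold mf_matrix; blk_simpl; simpl; ring).
  rewrite (rsum_eq0 n (fun l => mf_matrix (n + (n + k))%nat (n + l)%nat * z (n + l)%nat))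
    by (intros l Hl; unfold mf_matrix; blk_simpl; simpl; ring).
  rewrite (rsum_ext n (fun l => mf_matrix (n + (n + k))%nat (n + (n + l))%nat * z (n + (n + l))%nat)
                     (fun l => - (mtr A k l * z (n + (n + l))%nat)))
    by (intros l Hl; unfold mf_matrix; blk_simpl; simpl; unfold mtr; ring).
  unfold mf_matrix at 1. blk_simpl. simpl. rewrite !rsum_opp. ring.
Qed.

Lemma mvec_mf_matrix_s z : mvec (mf_dim n) mf_matrix z (n + (n + n))%nat = 0.
Proof. apply rsum_eq0. intros. unfold mf_matrix. rewrite blk_s. simpl. ring. Qed.

Definition mf_flow (z0 : vec) (t : R) : vec := mvec (mf_dim n) (mexp (mf_dim n) mf_matrix t) z0.

Lemma vderiv_on_mf_flow z0 :
  has_vderiv_on (mf_dim n) 0 T (mf_flow z0) (fun t => mvec (mf_dim n) mf_matrix (mf_flow z0 t)).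
Proof.
  eapply vderiv_on_ext;
    [|apply (vderiv_on_mvec_const _ 0 T _
              (fun t => mmul (mf_dim n) mf_matrix (mexp (mf_dim n) mf_matrix t)))].
  - intros t _ i _. apply mvec_mmul.
  - intros i j Hi _. apply deriv_on_of_is_derive. intros x. now apply is_derive_mexp.
Qed.

Lemma mf_flow_0 z0 i : (i < mf_dim n)%nat -> mf_flow z0 0 i = z0 i.
Proof.
  intros Hi. unfold mf_flow. rewrite <- (mvec_idm (mf_dim n) z0 i Hi).
  apply mvec_ext; [|intros k _; reflexivity]. intros k _. now apply mexp_0.
Qed.

Lemma mf_flow_s z0 t : 0 <= t <= T -> mf_flow z0 t (n + (n + n))%nat = z0 (n + (n + n))%nat.
Proof.
  intros Ht. assert (Hs : (n + (n + n) < mf_dim n)%nat) by (unfold mf_dim; lia).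
  rewrite <- (mf_flow_0 z0 _ Hs).
  apply (deriv_zero_const 0 T (fun t => mf_flow z0 t (n + (n + n))%nat)); auto.
  eapply deriv_on_ext; [|apply (vderiv_on_mf_flow z0 _ Hs)]. intros; apply mvec_mf_matrix_s.
Qed.

Definition mf_m (z0 : vec) (t : R) : vec := mf_flow z0 t.
Definition mf_p (z0 : vec) (t : R) : vec := fun k => mf_flow z0 t (n + k)%nat.
Definition mf_y (z0 : vec) (t : R) : vec := fun k => mf_flow z0 t (n + (n + k))%nat.

Lemma mf_flow_lin_MF z0 : let s := z0 (n + (n + n))%nat in
  lin_MF n T gamma AG S Qh Qg A (vscal s f) (vscal s g) (mf_m z0) (mf_p z0) (mf_y z0).
Proof.
  pose proof (vderiv_on_mf_flow z0) as Dz. split; [|split].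
  - intros k Hk. eapply deriv_on_ext; [|apply Dz; unfold mf_dim; lia].
    intros t Ht. simpl. rewrite mvec_mf_matrix_m by auto. reflexivity.
  - intros k Hk. eapply deriv_on_ext; [|apply (Dz (n + k)%nat); unfold mf_dim; lia].
    intros t Ht. simpl. rewrite mvec_mf_matrix_p, mf_flow_s by auto.
    unfold mf_m, mf_p. vsimp. ring.
  - intros k Hk. eapply deriv_on_ext; [|apply (Dz (n + (n + k))%nat); unfold mf_dim; lia].
    intros t Ht. simpl. rewrite mvec_mf_matrix_y, mf_flow_s by auto.
    unfold mf_m, mf_y. vsimp. ring.
Qed.

Lemma mf_flow_init_m m0 u s k : (k < n)%nat -> mf_m (mf_init n m0 u s) 0 k = m0 k.
Proof. intros Hk. unfold mf_m. rewrite mf_flow_0 by (unfold mf_dim; lia). now apply mf_init_m. Qed.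

Lemma mf_flow_init_u m0 u s b : (b < n + n)%nat -> mf_flow (mf_init n m0 u s) 0 (n + b)%nat = u b.
Proof. intros Hb. rewrite mf_flow_0 by (unfold mf_dim; lia). now apply mf_init_u. Qed.

Lemma mf_flow_init_lin_MF m0 u s :
  lin_MF n T gamma AG S Qh Qg A (vscal s f) (vscal s g)
    (mf_m (mf_init n m0 u s)) (mf_p (mf_init n m0 u s)) (mf_y (mf_init n m0 u s)).
Proof. pose proof (mf_flow_lin_MF (mf_init n m0 u s)) as H. simpl in H. now rewrite mf_init_s in H. Qed.

Lemma mf_terminal_inj : 0 <= T -> lin_MF_hom_unique n T gamma AG S Qh Qg A ->
  forall u : vec,
  (forall a, (a < n + n)%nat ->
     rsum (n + n) (fun b => mexp (mf_dim n) mf_matrix T (n + a)%nat (n + b)%nat * u b) = 0) ->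
  forall b, (b < n + n)%nat -> u b = 0.
Proof.
  intros HT Hhom u Hu. set (z0 := mf_init n vzero u 0).
  assert (HzT : forall a, (a < n + n)%nat -> mf_flow z0 T (n + a)%nat = 0)
    by (intros a Ha; unfold mf_flow, z0; rewrite mvec_mf_init_u; now apply Hu).
  destruct (Hhom (mf_m z0) (mf_p z0) (mf_y z0)) with (t := 0) as (_ & Hp0 & Hy0); try lra.
  - eapply lin_MF_forcing_ext; [| |apply mf_flow_init_lin_MF]; intros i _; vsimp; ring.
  - split; [|split]; intros k Hk.
    + now apply mf_flow_init_m.
    + apply HzT. lia.
    + apply (HzT (n + k)%nat). lia.
  - intros b Hb. destruct (Nat.ltb_spec b n) as [Hbn|Hbn].
    + rewrite <- (mf_flow_init_u vzero u 0 b) by lia. exact (Hp0 b Hbn).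
    + rewrite <- (mf_flow_init_u vzero u 0 b) by lia.
      replace (n + b)%nat with (n + (n + (b - n)))%nat by lia. apply Hy0. lia.
Qed.

(* The terminal values (p T, y T) depend affinely on the unknown initial values (p 0, y 0);
   uniqueness for the homogeneous problem makes the linear part invertible. *)
Lemma lin_MF_exists m0 : 0 <= T -> lin_MF_hom_unique n T gamma AG S Qh Qg A ->
  exists m p y, lin_MF n T gamma AG S Qh Qg A f g m p y /\ lin_MF_bc n T m0 m p y.
Proof.
  intros HT Hhom. set (E := mexp (mf_dim n) mf_matrix T).
  destruct (square_inj_surj (n + n) (fun a b => E (n + a)%nat (n + b)%nat) (mf_terminal_inj HT Hhom)
              (fun a => - mf_flow (mf_init n m0 vzero 1) T (n + a)%nat)) as [u Hu].
  set (z0 := mf_init n m0 u 1).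
  assert (Hsplit : forall i, mf_flow z0 T i
                   = mf_flow (mf_init n m0 vzero 1) T i + rsum (n + n) (fun b => E i (n + b)%nat * u b)).
  { intros i. unfold mf_flow, z0.
    rewrite (mvec_ext _ _ _ _ _ i (fun _ _ => eq_refl) (mf_init_split n m0 u)).
    now rewrite mvec_vadd, mvec_mf_init_u. }
  exists (mf_m z0), (mf_p z0), (mf_y z0). split; [|split; [|split]].
  - eapply lin_MF_forcing_ext; [| |apply mf_flow_init_lin_MF]; intros i _; vsimp; ring.
  - intros k Hk. now apply mf_flow_init_m.
  - intros k Hk. unfold mf_p. rewrite Hsplit, (Hu k) by lia. unfold vzero. ring.
  - intros k Hk. unfold mf_y. rewrite Hsplit, (Hu (n + k)%nat) by lia. unfold vzero. ring.
Qed.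

End AffineFlow.

Lemma lin_MF_sub n T gamma AG S Qh Qg A f g m p y m' p' y' :
  lin_MF n T gamma AG S Qh Qg A f g m p y -> lin_MF n T gamma AG S Qh Qg A f g m' p' y' ->
  lin_MF n T gamma AG S Qh Qg A vzero vzero
    (fun t => vsub (m t) (m' t)) (fun t => vsub (p t) (p' t)) (fun t => vsub (y t) (y' t)).
Proof.
  intros [Dm [Dp Dy]] [Dm' [Dp' Dy']]. split; [|split].
  - eapply vderiv_on_ext; [|apply vderiv_on_sub; [exact Dm | exact Dm']]. intros t _ i _. vsimp. ring.
  - eapply vderiv_on_ext; [|apply vderiv_on_sub; [exact Dp | exact Dp']]. intros t _ i _. vsimp. ring.
  - eapply vderiv_on_ext; [|apply vderiv_on_sub; [exact Dy | exact Dy']]. intros t _ i _. vsimp. ring.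
Qed.

Lemma lin_MF_bc_sub n T m0 m p y m' p' y' : lin_MF_bc n T m0 m p y -> lin_MF_bc n T m0 m' p' y' ->
  lin_MF_bc n T vzero (fun t => vsub (m t) (m' t)) (fun t => vsub (p t) (p' t)) (fun t => vsub (y t) (y' t)).
Proof.
  intros [Hm [Hp Hy]] [Hm' [Hp' Hy']].
  split; [|split]; intros i Hi; vsimp; [rewrite Hm, Hm' | rewrite Hp, Hp' | rewrite Hy, Hy']; auto; ring.
Qed.

Lemma lin_MF_unique n T gamma AG S Qh Qg A f g m0 m p y m' p' y' :
  lin_MF_hom_unique n T gamma AG S Qh Qg A ->
  lin_MF n T gamma AG S Qh Qg A f g m p y -> lin_MF_bc n T m0 m p y ->
  lin_MF n T gamma AG S Qh Qg A f g m' p' y' -> lin_MF_bc n T m0 m' p' y' ->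
  forall t, 0 <= t <= T -> veq n (m t) (m' t) /\ veq n (p t) (p' t) /\ veq n (y t) (y' t).
Proof.
  intros Hhom Hs Hbc Hs' Hbc' t Ht.
  destruct (Hhom _ _ _ (lin_MF_sub _ _ _ _ _ _ _ _ _ _ _ _ _ _ _ _ Hs Hs')
                       (lin_MF_bc_sub _ _ _ _ _ _ _ _ _ Hbc Hbc') t Ht) as (Em & Ep & Ey).
  split; [|split]; intros i Hi; [specialize (Em i Hi) | specialize (Ep i Hi) | specialize (Ey i Hi)];
    rewrite vsub_app in *; unfold vzero in *; lra.
Qed.

Lemma mvec_idm_sub n P Gam x i :
  mvec n P (mvec n (msub idm Gam) x) i = mvec n P x i - mvec n P (mvec n Gam x) i.
Proof.
  rewrite <- mvec_vsub. apply mvec_ext; [reflexivity|]. intros k Hk. now rewrite mvec_msub, mvec_idm.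
Qed.

Lemma MF_sol_iff n n1 T gamma A G Gam B Q H R0 eta m0 m p y :
  meq n n H (fun _ _ => 0) ->
  let Pm := mmul n (mtr (msub idm Gam)) Q in
  MF_sol n n1 T gamma A G Gam B Q H R0 eta m0 m p y <->
  lin_MF n T gamma (madd A G) (mmul n1 (mmul n1 B (minv n1 R0)) (mtr B))
    (mmul n Pm (msub idm Gam)) (mmul n Q (msub idm Gam)) A (mvec n Pm eta) (mvec n Q eta) m p y /\
  lin_MF_bc n T m0 m p y.
Proof.
  intros H0 Pm. unfold MF_sol, lin_MF, lin_MF_bc.
  assert (Ep : forall t i,
            vsub (vopp (mvec n (mtr (madd A G)) (p t))) (mvec n Pm (vsub (m t) (vadd (mvec n Gam (m t)) eta))) i
            = vadd (vsub (vopp (mvec n (mtr (madd A G)) (p t))) (mvec n (mmul n Pm (msub idm Gam)) (m t)))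
                      (mvec n Pm eta) i)
    by (intros; vsimp; rewrite mvec_idm_sub; vsimp; ring).
  assert (Ey : forall t i,
            vadd (vopp (mvec n (mtr A) (y t))) (mvec n Q (vsub (m t) (vadd (mvec n Gam (m t)) eta))) i
            = vsub (vadd (vopp (mvec n (mtr A) (y t))) (mvec n (mmul n Q (msub idm Gam)) (m t)))
                      (mvec n Q eta) i)
    by (intros; vsimp; rewrite mvec_idm_sub; vsimp; ring).
  assert (EH : forall t, veq n (mvec n H (m t)) vzero) by (intros t i Hi; now apply mvec_eq0).
  split.
  - intros [Dm [Dp [Dy [Hm0 [HpT HyT]]]]]. split; [split; [exact Dm | split] | split; [exact Hm0 | split]].
    + eapply vderiv_on_ext; [|exact Dp]. intros t _ i _. apply Ep.
    + eapply vderiv_on_ext; [|exact Dy]. intros t _ i _. apply Ey.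
    + intros i Hi. now rewrite HpT, EH.
    + intros i Hi. rewrite HyT by auto. unfold vopp. rewrite EH by auto. unfold vzero. ring.
  - intros [[Dm [Dp Dy]] [Hm0 [HpT HyT]]]. split; [exact Dm | split; [|split; [|split; [exact Hm0 | split]]]].
    + eapply vderiv_on_ext; [|exact Dp]. intros t _ i _. symmetry. apply Ep.
    + eapply vderiv_on_ext; [|exact Dy]. intros t _ i _. symmetry. apply Ey.
    + intros i Hi. now rewrite HpT, EH.
    + intros i Hi. rewrite HyT by auto. unfold vopp. rewrite EH by auto. unfold vzero. ring.
Qed.

Lemma Qhat_symmetric n Gam Q : symmetric n Q ->
  symmetric n (mmul n (mmul n (mtr (msub idm Gam)) Q) (msub idm Gam)).
Proof.
  intros HQ i j Hi Hj. unfold mmul, mtr.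
  transitivity (rsum n (fun k => rsum n (fun l => msub idm Gam l i * Q l k * msub idm Gam k j)));
    [apply rsum_ext; intros; now rewrite <- rsum_scal_r|].
  rewrite rsum_comm. symmetry.
  transitivity (rsum n (fun k => rsum n (fun l => msub idm Gam l j * Q l k * msub idm Gam k i)));
    [apply rsum_ext; intros; now rewrite <- rsum_scal_r|].
  apply rsum_ext; intros k Hk. apply rsum_ext; intros l Hl. rewrite (HQ l k) by auto. unfold mtr. ring.
Qed.

Lemma riccati_rhs_mtr n AG Qh gamma K t i j : symmetric n Qh -> (i < n)%nat -> (j < n)%nat ->
  riccati_rhs n AG Qh gamma K t j i = riccati_rhs n AG Qh gamma (fun t => mtr (K t)) t i j.
Proof.
  intros HQ Hi Hj. unfold riccati_rhs, madd, mopp, mscal, mmul, mtr.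
  rewrite (HQ j i) by auto. unfold mtr.
  rewrite (rsum_ext n (fun k => K t j k * AG k i) (fun k => AG k i * K t j k)) by (intros; ring).
  rewrite (rsum_ext n (fun k => AG k j * K t k i) (fun k => K t k i * AG k j)) by (intros; ring).
  rewrite (rsum_ext n (fun k => K t j k * K t k i) (fun k => K t k i * K t j k)) by (intros; ring).
  ring.
Qed.

Lemma riccati_sol_mtr n T gamma A G Gam Q H K : symmetric n Q -> symmetric n H ->
  riccati_sol n T gamma A G Gam Q H K -> riccati_sol n T gamma A G Gam Q H (fun t => mtr (K t)).
Proof.
  intros HQ HH [HKd HKT]. split.
  - intros i j Hi Hj. eapply deriv_on_ext; [|exact (HKd j i Hj Hi)].
    intros t _. apply riccati_rhs_mtr; auto. now apply Qhat_symmetric.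
  - intros i j Hi Hj. unfold mtr, mopp. rewrite HKT by auto. unfold mopp. now rewrite (HH j i).
Qed.

Theorem theorem15 (n n1 : nat) (T gamma : R) (A G Gam B Q H R0 : mat) (eta m0 : vec)
  (Hn : (1 <= n)%nat) (Hn1 : (1 <= n1)%nat) (HT : 0 < T) (Hgamma : 0 < gamma)
  (HQ : psd n Q) (HH : psd n H) (HR : pd n1 R0)
  (H0 : meq n n H (fun _ _ => 0))
  (K : R -> mat)
  (HK : riccati_sol n T gamma A G Gam Q H K)
  (HKuniq : forall K', riccati_sol n T gamma A G Gam Q H K' ->
             forall t, 0 <= t <= T -> meq n n (K' t) (K t))
  (Phi : R -> R -> mat)
  (HPhi : fundamental_sol n T gamma A G K Phi)
  (c1 c2 c3 c4 : R)
  (Hc1 : is_max_on (fun t => 0 <= t <= T) (fun t => fnorm n n (K t)) c1)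
  (Hc2 : is_max_on (fun ts : R * R => 0 <= fst ts <= T /\ 0 <= snd ts <= T)
           (fun ts => fnorm n n (Phi (fst ts) (snd ts))) c2)
  (Hc3 : is_max_on (fun t => 0 <= t <= T)
           (fun t => integral (fun s => fnorm n n (mexp n A (s - t)) * s) t T) c3)
  (Hc4 : is_max_on (fun t => 0 <= t <= T)
           (fun t => integral (fun s => fnorm n n (mexp n A (s - t)) * (T * s - s ^ 2 / 2)) t T) c4)
  (Hsmall : c2 * fnorm n n (mmul n1 (mmul n1 B (minv n1 R0)) (mtr B))
               * fnorm n n (mmul n Q (msub idm Gam))
               * (c3 + gamma * c1 * c2 * c4) < 1) :
  (exists m p y : R -> vec, MF_sol n n1 T gamma A G Gam B Q H R0 eta m0 m p y) /\
  (forall m p y m' p' y',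
     MF_sol n n1 T gamma A G Gam B Q H R0 eta m0 m p y ->
     MF_sol n n1 T gamma A G Gam B Q H R0 eta m0 m' p' y' ->
     forall t, 0 <= t <= T ->
       veq n (m t) (m' t) /\ veq n (p t) (p' t) /\ veq n (y t) (y' t)).
Proof.
  destruct HQ as [HQs _], HH as [HHs _], Hc1 as [_ Hc1], Hc2 as [_ Hc2], Hc3 as [_ Hc3], Hc4 as [_ Hc4].
  set (S := mmul n1 (mmul n1 B (minv n1 R0)) (mtr B)) in *.
  set (Pm := mmul n (mtr (msub idm Gam)) Q).
  set (Qg := mmul n Q (msub idm Gam)) in *.
  assert (HKsym : forall t, 0 <= t <= T -> forall i j, (i < n)%nat -> (j < n)%nat -> K t j i = K t i j)
    by (intros t Ht i j Hi Hj;
        exact (HKuniq _ (riccati_sol_mtr _ _ _ _ _ _ _ _ _ HQs HHs HK) t Ht i j Hi Hj)).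
  assert (Hhom : lin_MF_hom_unique n T gamma (madd A G) S (mmul n Pm (msub idm Gam)) Qg A).
  { intros m p y Hsys [Hm0 [HpT HyT]].
    eapply (hom_zero n T gamma c1 c2 _ _ _ _ _ K Phi HT Hgamma (proj1 HK)); eauto.
    - intros i j Hi Hj. destruct HK as [_ HKT]. rewrite HKT by auto. unfold mopp. rewrite H0; auto. ring.
    - intros s Hs. apply HPhi, Hs.
    - intros s Hs. apply HPhi, Hs.
    - intros t s Ht Hs. apply (Hc2 (t, s)). auto. }
  split.
  - destruct (lin_MF_exists n T gamma (madd A G) S (mmul n Pm (msub idm Gam)) Qg A
                (mvec n Pm eta) (mvec n Q eta) m0 ltac:(lra) Hhom) as [m [p [y Hsol]]].
    exists m, p, y. now apply MF_sol_iff.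
  - intros m p y m' p' y' Hs Hs'.
    apply (MF_sol_iff _ _ _ _ _ _ _ _ _ _ _ _ _ _ _ _ H0) in Hs as [Hs Hbc], Hs' as [Hs' Hbc'].
    exact (lin_MF_unique _ _ _ _ _ _ _ _ _ _ _ _ _ _ _ _ _ Hhom Hs Hbc Hs' Hbc').
Qed.
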